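(* Let $0\le q<N$ and let $[\beta]$ be a nonzero element of $H^{q+1}(E_0)$. Then $[\beta]$ is a second class obstructed element if and only if there exist an integer $n\ge1$ and a class $c\in H^q(\mathcal{E}_0^\bullet\otimes_{\mathcal{O}}\mathcal{O}/\mathfrak{m}_0^n)$ such that $o^q_{n,n-1}(c)=\rho^{q+1}_{n-1}([\beta])$.
   Context: Setting. Let $B$ be a one-dimensional complex manifold (a disc) with holomorphic coordinate $t$ centred at a point $0\in B$; write $\mathcal{O}=\mathcal{O}_{B,0}$ and $\mathfrak{m}_0=t\mathcal{O}$ for its maximal ideal. Let $(E^\bullet,d^\bullet)$: $0\to E^0\xrightarrow{d^0}E^1\xrightarrow{d^1}\cdots\xrightarrow{d^{N-1}}E^N\to 0$ be a bounded complex of holomorphic vector bundles on $B$ whose differentials are $\mathcal{O}_B$-linear holomorphic bundle maps with $d^{q+1}\circ d^q=0$. For $s\in B$, $E_s^\bullet$ denotes the fibre complex (with differentials $d^q_s$) and $H^q(E_s)=\ker d^q_s/\mathrm{im}\, d^{q-1}_s$. Let $\mathcal{E}_0^q$ be the stalk at $0$ of the sheaf of holomorphic sections of $E^q$; for a germ $s$, $s(0)$ is its value at $0$. For $n\ge1$, $\mathcal{E}_0^\bullet\otimes_{\mathcal{O}}\mathcal{O}/\mathfrak{m}_0^n$ is the induced truncated complex with cohomology $H^q(\mathcal{E}_0^\bullet\otimes_{\mathcal{O}}\mathcal{O}/\mathfrak{m}_0^n)$. Obstruction maps. $o_n^q:H^q(\mathcal{E}_0^\bullet\otimes\mathcal{O}/\mathfrak{m}_0^n)\to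 H^{q+1}(E_0)$ sends the class of $\tilde\alpha \bmod t^n$ (where $\tilde\alpha\in\mathcal{E}_0^q$ with $d^q\tilde\alpha\in t^n\mathcal{E}_0^{q+1}$) to the class of $(t^{-n}d^q\tilde\alpha)(0)$ (this is well defined). For $i\ge 0$, $\rho_i^q:H^q(E_0)\to H^q(\mathcal{E}_0^\bullet\otimes\mathcal{O}/\mathfrak{m}_0^{i+1})$ is $[\sigma]\mapsto[t^i\tilde\sigma \bmod t^{i+1}]$, where $\tilde\sigma$ is any germ with $\tilde\sigma(0)=\sigma$. For $0\le i\le n$ set $o^q_{n,i}=\rho_i^{q+1}\circ o_n^q$. Second class obstructed elements. A nonzero class $[\beta]\in H^{q+1}(E_0)$ is called a second class obstructed element if there exist an open neighbourhood $W$ of $0$ and a holomorphic section $\tilde\beta$ of $E^{q+1}$ over $W$ such that $d^{q+1}\tilde\beta=0$ on $W$, $\tilde\beta(0)$ represents $[\beta]$, and $\tilde\beta(s)\in\mathrm{im}(d^q_s:E^q_s\to E^{q+1}_s)$ for every $s\in W\setminus\{0\}$. *)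

(* complex numbers as R*R, holomorphic functions on discs as
   convergent power series, bundles trivialised. *)
From Stdlib Require Import Reals ClassicalEpsilon.
Open Scope R_scope.

Definition Cplx : Type := (R * R)%type.
Definition C0 : Cplx := (0, 0).
Definition C1 : Cplx := (1, 0).
Definition Cadd (z w : Cplx) : Cplx := (fst z + fst w, snd z + snd w).
Definition Copp (z : Cplx) : Cplx := (- fst z, - snd z).
Definition Csub (z w : Cplx) : Cplx := Cadd z (Copp w).
Definition Cmul (z w : Cplx) : Cplx :=
  (fst z * fst w - snd z * snd w, fst z * snd w + snd z * fst w).
Fixpoint Cpow (z : Cplx) (n : nat) : Cplx :=
  match n with O => C1 | S k => Cmul z (Cpow z k) end.
Definition Cnorm2 (z : Cplx) : R := fst z * fst z + snd z * snd z.

Fixpoint csum (n : nat) (f : nat -> Cplx) : Cplx :=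
  match n with O => C0 | S k => Cadd (csum k f) (f k) end.

(* a : nat -> Cplx is the coefficient sequence of sum_m a_m t^m *)
Definition ps_partial (a : nat -> Cplx) (z : Cplx) (n : nat) : Cplx :=
  csum (S n) (fun m => Cmul (a m) (Cpow z m)).
Definition ps_has_sum (a : nat -> Cplx) (z w : Cplx) : Prop :=
  Un_cv (fun n => fst (ps_partial a z n)) (fst w) /\
  Un_cv (fun n => snd (ps_partial a z n)) (snd w).
Definition ps_conv_on (a : nat -> Cplx) (rho : R) : Prop :=
  forall z, Cnorm2 z < rho * rho -> exists w, ps_has_sum a z w.
(* value of the series at z (its sum, when it converges) *)
Definition ps_eval (a : nat -> Cplx) (z : Cplx) : Cplx :=
  epsilon (inhabits C0) (ps_has_sum a z).
(* germ of holomorphic function at 0 = power series with positive radius *)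
Definition is_germ (a : nat -> Cplx) : Prop :=
  exists rho, 0 < rho /\ ps_conv_on a rho.

(* ---------- the complex E^. of (trivialised) bundles on B ----------
   B = open disc {|t| < RB}; E^k = B x C^(r k), r k = 0 for k > N;
   d k m i j = coefficient of t^m in entry (i,j) of d^k : E^k -> E^(k+1),
   i < r (k+1), j < r k.  Germ vectors: a m i = coeff. of t^m in component i. *)
Definition is_bounded_complex (N : nat) (RB : R) (r : nat -> nat)
    (d : nat -> nat -> nat -> nat -> Cplx) : Prop :=
  0 < RB /\
  (forall k, (N < k)%nat -> r k = O) /\
  (forall k i j, (i < r (S k))%nat -> (j < r k)%nat ->
      ps_conv_on (fun m => d k m i j) RB) /\
  (* d^(k+1) o d^k = 0 at every point of B *)
  (forall k z, Cnorm2 z < RB * RB ->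
    forall i l, (i < r (S (S k)))%nat -> (l < r k)%nat ->
      csum (r (S k)) (fun j => Cmul (ps_eval (fun m => d (S k) m i j) z)
                                    (ps_eval (fun m => d k m j l) z)) = C0).

(* fibre map d^k_s evaluated on a vector x, component i *)
Definition fibre_apply (r : nat -> nat) (d : nat -> nat -> nat -> nat -> Cplx)
    (k : nat) (s : Cplx) (x : nat -> Cplx) (i : nat) : Cplx :=
  csum (r k) (fun j => Cmul (ps_eval (fun m => d k m i j) s) (x j)).

(* fibre at 0: the value at 0 of a germ is its constant coefficient *)
Definition d0_apply (r : nat -> nat) (d : nat -> nat -> nat -> nat -> Cplx)
    (k : nat) (x : nat -> Cplx) (i : nat) : Cplx :=
  csum (r k) (fun j => Cmul (d k O i j) (x j)).
Definition ker0 r d k (v : nat -> Cplx) : Prop :=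
  forall i, (i < r (S k))%nat -> d0_apply r d k v i = C0.
Definition im0 r d k (v : nat -> Cplx) : Prop :=
  exists x : nat -> Cplx, forall i, (i < r (S k))%nat -> v i = d0_apply r d k x i.
(* [u] = [v] in H^(k+1)(E_0) *)
Definition H0_eq r d k (u v : nat -> Cplx) : Prop :=
  im0 r d k (fun i => Csub (u i) (v i)).

Definition is_germ_vec (rk : nat) (a : nat -> nat -> Cplx) : Prop :=
  forall i, (i < rk)%nat -> is_germ (fun m => a m i).
(* d^k applied to a germ vector (Cauchy product of series) *)
Definition dgerm (r : nat -> nat) (d : nat -> nat -> nat -> nat -> Cplx) (k : nat)
    (a : nat -> nat -> Cplx) : nat -> nat -> Cplx :=
  fun m i => csum (S m) (fun l =>
               csum (r k) (fun j => Cmul (d k l i j) (a (m - l)%nat j))).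

(* a mod t^n is a cocycle of E_0^. (x) O/m^n in degree k, i.e. d^k a in t^n E^(k+1) *)
Definition trunc_cocycle r d k n (a : nat -> nat -> Cplx) : Prop :=
  forall m i, (m < n)%nat -> (i < r (S k))%nat -> dgerm r d k a m i = C0.
(* [u mod t^n] = [v mod t^n] in H^(k+1)(E_0^. (x) O/m^n) *)
Definition Htrunc_eq r d k n (u v : nat -> nat -> Cplx) : Prop :=
  exists eta, is_germ_vec (r k) eta /\
    forall m i, (m < n)%nat -> (i < r (S k))%nat ->
      Csub (u m i) (v m i) = dgerm r d k eta m i.

(* o_n^k on representatives: class of (t^-n d^k a)(0) *)
Definition obs_rep r d k n (a : nat -> nat -> Cplx) : nat -> Cplx :=
  fun i => dgerm r d k a n i.
(* rho_i on representatives: t^i * (constant germ sigma) *)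
Definition rho_rep (i : nat) (sigma : nat -> Cplx) : nat -> nat -> Cplx :=
  fun m j => if Nat.eqb m i then sigma j else C0.
(* o_{n,i}^k = rho_i^(k+1) o o_n^k on representatives *)
Definition o_ni_rep r d k n i (a : nat -> nat -> Cplx) : nat -> nat -> Cplx :=
  rho_rep i (obs_rep r d k n a).

(* second class obstructed element (condition on a representative beta of the
   nonzero class [beta] in H^(q+1)(E_0)); W shrunk to a disc |s| < rho *)
Definition second_class_obstructed (RB : R) (r : nat -> nat)
    (d : nat -> nat -> nat -> nat -> Cplx) (q : nat) (beta : nat -> Cplx) : Prop :=
  exists rho, 0 < rho /\ rho <= RB /\
  exists bt : nat -> nat -> Cplx,
    (forall i, (i < r (S q))%nat -> ps_conv_on (fun m => bt m i) rho) /\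
    (forall s, Cnorm2 s < rho * rho ->
       forall i, (i < r (S (S q)))%nat ->
         fibre_apply r d (S q) s (fun j => ps_eval (fun m => bt m j) s) i = C0) /\
    (* bt(0) represents [beta] *)
    ker0 r d (S q) (fun j => bt O j) /\ H0_eq r d q (fun j => bt O j) beta /\
    (forall s, 0 < Cnorm2 s -> Cnorm2 s < rho * rho ->
       exists x : nat -> Cplx, forall i, (i < r (S q))%nat ->
         ps_eval (fun m => bt m i) s = fibre_apply r d q s x i).

(** Germs at [0] (convergent power series) form an integral domain [G], and [d^q]
    becomes a matrix [D] over [G]; let [b] be the germ column of [beta~].
    (=>) By a Fredholm alternative over the fraction field of [G], either
    [c b = D y] with [c <> 0], or some [w] has [w D = 0], [w b <> 0]; the latter
    fails since [b(s) = D(s) X] at small real [s > 0] and the identity theorem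
    gives [w b = 0].  If [c] has order [n0], [alpha = t c(n0)^-1 y] is a cocycle
    mod [t^(n0+1)] whose obstruction is [b(0)], a representative of [[beta]].
    (<=) If [o_(n,n-1)(alpha) = rho_(n-1)(beta) + d eta] mod [t^n], then
    [Y = D (alpha - t eta)] vanishes to order [n] with [t^n]-coefficient [beta];
    [t^-n Y] is a cocycle with value [beta] at [0], in the image of [d^q_s] for
    [s <> 0].
    Order of the file: complex series and the identity theorem; the ring of germs
    and the Fredholm alternative; the complex as germ matrices; the two directions. *)

From Pilot Require Import Defs.
From Stdlib Require Import Reals Lra Lia Psatz Arith ClassicalEpsilon Classical
  FunctionalExtensionality ProofIrrelevance PropExtensionality.
Open Scope R_scope.

(** * Complex arithmetic on pairs of reals *)

Ltac destruct_cplx := repeat match goal with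
  | z : Cplx |- _ => let a := fresh "a" in let b := fresh "b" in destruct z as [a b]
  | z : (R * R)%type |- _ => let a := fresh "a" in let b := fresh "b" in destruct z as [a b]
  end.

Ltac cplx_ring :=
  unfold Csub in *; unfold Cmul, Cadd, Copp, C0, Defs.C1, Cnorm2 in *; destruct_cplx;
  simpl in *; try (f_equal; ring).

Lemma Cplx_ext (z w : Cplx) : fst z = fst w -> snd z = snd w -> z = w.
Proof. destruct z, w; simpl; intros; subst; auto. Qed.

Lemma Cadd_comm z w : Cadd z w = Cadd w z. Proof. cplx_ring. Qed.
Lemma Cadd_assoc z w u : Cadd z (Cadd w u) = Cadd (Cadd z w) u. Proof. cplx_ring. Qed.
Lemma Cadd_0l z : Cadd C0 z = z. Proof. cplx_ring. Qed.
Lemma Cadd_0r z : Cadd z C0 = z. Proof. cplx_ring. Qed.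
Lemma Cadd_oppl z : Cadd (Copp z) z = C0. Proof. cplx_ring. Qed.
Lemma Cmul_comm z w : Cmul z w = Cmul w z. Proof. cplx_ring. Qed.
Lemma Cmul_assoc z w u : Cmul z (Cmul w u) = Cmul (Cmul z w) u. Proof. cplx_ring. Qed.
Lemma Cmul_1l z : Cmul Defs.C1 z = z. Proof. cplx_ring. Qed.
Lemma Cmul_0l z : Cmul C0 z = C0. Proof. cplx_ring. Qed.
Lemma Cmul_0r z : Cmul z C0 = C0. Proof. cplx_ring. Qed.
Lemma Cmul_addl z w u : Cmul (Cadd z w) u = Cadd (Cmul z u) (Cmul w u). Proof. cplx_ring. Qed.

Lemma Cpow_add z m n : Cpow z (m + n) = Cmul (Cpow z m) (Cpow z n).
Proof. induction m; simpl. - now rewrite Cmul_1l. - rewrite IHm. apply Cmul_assoc. Qed.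

Definition Cinv (z : Cplx) : Cplx := (fst z / Cnorm2 z, - snd z / Cnorm2 z).

Lemma Cinv_l z : z <> C0 -> Cmul (Cinv z) z = Defs.C1.
Proof.
  intros H. assert (Hn : Cnorm2 z <> 0).
  { intro E. apply H. unfold Cnorm2, C0 in *. destruct z; simpl in *. f_equal; nra. }
  unfold Cinv, Cmul, Defs.C1, Cnorm2 in *. destruct z as [x y]; simpl in *. f_equal; field; auto.
Qed.

Lemma csum_fst n f : fst (csum (S n) f) = sum_f_R0 (fun m => fst (f m)) n.
Proof. induction n; simpl in *. - unfold C0; simpl; ring. - now rewrite <- IHn. Qed.
Lemma csum_snd n f : snd (csum (S n) f) = sum_f_R0 (fun m => snd (f m)) n.
Proof. induction n; simpl in *. - unfold C0; simpl; ring. - now rewrite <- IHn. Qed.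

Lemma csum_ext n f g : (forall m, (m < n)%nat -> f m = g m) -> csum n f = csum n g.
Proof. induction n; simpl; intros; auto. rewrite IHn, H; auto. Qed.
Lemma csum_zero n f : (forall m, (m < n)%nat -> f m = C0) -> csum n f = C0.
Proof. induction n; simpl; intros; auto. rewrite IHn, H; auto. apply Cadd_0r. Qed.
Lemma csum_add n f g : csum n (fun m => Cadd (f m) (g m)) = Cadd (csum n f) (csum n g).
Proof. induction n; simpl. - cplx_ring. - rewrite IHn. cplx_ring. Qed.
Lemma csum_mull n f c : csum n (fun m => Cmul c (f m)) = Cmul c (csum n f).
Proof. induction n; simpl. - cplx_ring. - rewrite IHn. cplx_ring. Qed.
Lemma csum_first N u : csum (S N) u = Cadd (u O) (csum N (fun m => u (S m))).
Proof. induction N; simpl in *. - cplx_ring. - rewrite IHN. cplx_ring. Qed.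
Lemma csum_trailing_zero n f : (forall m, (n <= m)%nat -> f m = C0) ->
  forall N, (n <= N)%nat -> csum N f = csum n f.
Proof. intros H N HN. induction HN; auto. simpl. rewrite IHHN, H by lia. apply Cadd_0r. Qed.

Definition Cabs (z : Cplx) : R := sqrt (Cnorm2 z).

Lemma Cnorm2_ge0 z : 0 <= Cnorm2 z. Proof. unfold Cnorm2; nra. Qed.
Lemma Cabs_ge0 z : 0 <= Cabs z. Proof. apply sqrt_pos. Qed.
Lemma Cabs_sq z : Cabs z * Cabs z = Cnorm2 z.
Proof. apply sqrt_sqrt, Cnorm2_ge0. Qed.
Lemma Cabs_mul z w : Cabs (Cmul z w) = Cabs z * Cabs w.
Proof.
  unfold Cabs. replace (Cnorm2 (Cmul z w)) with (Cnorm2 z * Cnorm2 w) by (cplx_ring; ring).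
  apply sqrt_mult; apply Cnorm2_ge0.
Qed.
Lemma Cabs_fst z : Rabs (fst z) <= Cabs z.
Proof. unfold Cabs. rewrite <- sqrt_Rsqr_abs. apply sqrt_le_1_alt. unfold Rsqr, Cnorm2. nra. Qed.
Lemma Cabs_snd z : Rabs (snd z) <= Cabs z.
Proof. unfold Cabs. rewrite <- sqrt_Rsqr_abs. apply sqrt_le_1_alt. unfold Rsqr, Cnorm2. nra. Qed.
Lemma Cabs_le_parts z : Cabs z <= Rabs (fst z) + Rabs (snd z).
Proof.
  apply Rsqr_incr_0_var. 2: generalize (Rabs_pos (fst z)) (Rabs_pos (snd z)); lra.
  unfold Rsqr. rewrite Cabs_sq. unfold Cnorm2.
  generalize (Rabs_pos (fst z)) (Rabs_pos (snd z)). intros.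
  rewrite <- (Rabs_pos_eq (fst z * fst z)), <- (Rabs_pos_eq (snd z * snd z)), !Rabs_mult by nra.
  nra.
Qed.
Lemma Cabs_triangle z w : Cabs (Cadd z w) <= Cabs z + Cabs w.
Proof.
  apply Rsqr_incr_0_var. 2: generalize (Cabs_ge0 z) (Cabs_ge0 w); lra.
  unfold Rsqr. rewrite Cabs_sq.
  replace ((Cabs z + Cabs w) * (Cabs z + Cabs w)) with (Cnorm2 z + Cnorm2 w + 2 * (Cabs z * Cabs w))
    by (rewrite <- (Cabs_sq z), <- (Cabs_sq w); ring).
  assert (Cauchy_Schwarz : fst z * fst w + snd z * snd w <= Cabs z * Cabs w).
  { unfold Cabs. rewrite <- sqrt_mult by apply Cnorm2_ge0.
    apply Rle_trans with (Rabs (fst z * fst w + snd z * snd w)). apply Rle_abs.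
    rewrite <- sqrt_Rsqr_abs. apply sqrt_le_1_alt. unfold Rsqr, Cnorm2.
    generalize (pow2_ge_0 (fst z * snd w - snd z * fst w)). intro. nra. }
  unfold Cadd, Cnorm2 in *; simpl. nra.
Qed.
Lemma Cabs_pow z m : Cabs (Cpow z m) = Cabs z ^ m.
Proof.
  induction m; simpl.
  - unfold Cabs, Cnorm2, Defs.C1; simpl. replace (1 * 1 + 0 * 0) with 1 by ring. apply sqrt_1.
  - now rewrite Cabs_mul, IHm.
Qed.
Lemma Cabs_opp z : Cabs (Copp z) = Cabs z.
Proof. unfold Cabs, Copp, Cnorm2; simpl. f_equal; ring. Qed.
Lemma Cabs_real x : Cabs (x, 0) = Rabs x.
Proof. unfold Cabs, Cnorm2; simpl. rewrite <- sqrt_Rsqr_abs. f_equal. unfold Rsqr; ring. Qed.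
Lemma Cabs0 : Cabs C0 = 0.
Proof. unfold Cabs, Cnorm2, C0; simpl. replace (0 * 0 + 0 * 0) with 0 by ring. apply sqrt_0. Qed.
Lemma Cabs_eq0 z : Cabs z = 0 -> z = C0.
Proof.
  intro H. assert (Cnorm2 z = 0) by (rewrite <- Cabs_sq, H; ring).
  unfold Cnorm2, C0 in *. destruct z; simpl in *. f_equal; nra.
Qed.
Lemma Cnorm2_real_pos x : 0 < x -> 0 < Cnorm2 (x, 0).
Proof. intros. unfold Cnorm2; simpl. nra. Qed.
Lemma Cabs_lt_of_norm2 s rho : 0 < rho -> Cnorm2 s < rho * rho -> Cabs s < rho.
Proof. intros H1 H2. rewrite <- Cabs_sq in H2. generalize (Cabs_ge0 s). nra. Qed.

Lemma Cmul_neq0 z w : z <> C0 -> w <> C0 -> Cmul z w <> C0.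
Proof.
  intros Hz Hw E. assert (H : Cabs (Cmul z w) = 0) by (rewrite E; apply Cabs0).
  rewrite Cabs_mul in H. apply Rmult_integral in H. destruct H as [H|H]; apply Cabs_eq0 in H; auto.
Qed.
Lemma Cpow_neq0 s n : s <> C0 -> Cpow s n <> C0.
Proof.
  intros H. induction n; simpl.
  - unfold Defs.C1, C0. intro E; inversion E; lra.
  - now apply Cmul_neq0.
Qed.

Fixpoint rsum (n : nat) (f : nat -> R) : R :=
  match n with O => 0 | S k => rsum k f + f k end.

Lemma Cabs_csum n f : Cabs (csum n f) <= rsum n (fun m => Cabs (f m)).
Proof. induction n; simpl. - rewrite Cabs0; lra. - eapply Rle_trans. apply Cabs_triangle. lra. Qed.
Lemma rsum_le n f g : (forall m, (m < n)%nat -> f m <= g m) -> rsum n f <= rsum n g.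
Proof. induction n; simpl; intros. - lra. - apply Rplus_le_compat; auto. Qed.
Lemma rsum_scal n f c : rsum n (fun m => c * f m) = c * rsum n f.
Proof. induction n; simpl. - ring. - rewrite IHn. ring. Qed.
Lemma rsum_nonneg n f : (forall m, 0 <= f m) -> 0 <= rsum n f.
Proof. intros H; induction n; simpl. - lra. - specialize (H n). lra. Qed.
Lemma rsum_geom n q : 0 <= q < 1 -> rsum n (fun m => q ^ m) <= / (1 - q).
Proof.
  intros Hq. assert (E : rsum n (fun m => q ^ m) * (1 - q) = 1 - q ^ n).
  { induction n; simpl. ring. rewrite Rmult_plus_distr_r, IHn. ring. }
  apply Rmult_le_reg_r with (1 - q). lra. rewrite E, Rinv_l by lra.
  generalize (pow_le q n (proj1 Hq)). lra.
Qed.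

(** * Complex series *)

Definition ser_has_sum (u : nat -> Cplx) (w : Cplx) : Prop :=
  Un_cv (fun n => fst (csum (S n) u)) (fst w) /\ Un_cv (fun n => snd (csum (S n) u)) (snd w).

Lemma ps_has_sum_ser a z w :
  ps_has_sum a z w <-> ser_has_sum (fun m => Cmul (a m) (Cpow z m)) w.
Proof. unfold ps_has_sum, ser_has_sum, ps_partial. tauto. Qed.

Lemma ser_unique u w1 w2 : ser_has_sum u w1 -> ser_has_sum u w2 -> w1 = w2.
Proof.
  intros [H1 H2] [H3 H4]. apply Cplx_ext; eapply UL_sequence; eauto.
Qed.

Lemma ser_ext u v w : (forall m, u m = v m) -> ser_has_sum u w -> ser_has_sum v w.
Proof. intros E H. replace v with u; auto. apply functional_extensionality; auto. Qed.

Lemma Un_cv_eventually (U V : nat -> R) l N0 :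
  (forall n, (N0 <= n)%nat -> U n = V n) -> Un_cv V l -> Un_cv U l.
Proof.
  intros E H eps Heps. destruct (H eps Heps) as [N HN]. exists (max N N0). intros n Hn.
  rewrite E by lia. apply HN. lia.
Qed.

Lemma Un_cv_const l : Un_cv (fun _ => l) l.
Proof. intros e He; exists O; intros; unfold Rdist, R_dist; rewrite Rminus_diag, Rabs_R0; auto. Qed.

Lemma real_geom_dominated_conv (v : nat -> R) M q : 0 <= q < 1 ->
  (forall m, Rabs (v m) <= M * q ^ m) -> { l | Un_cv (fun n => sum_f_R0 v n) l }.
Proof.
  intros Hq Hv. apply R_complete. apply cauchy_abs. apply CV_Cauchy.
  apply Rseries_CV_comp with (Bn := fun m => M * q ^ m).
  { intros n; split. apply Rabs_pos. apply Hv. }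
  exists (M * / (1 - q)).
  assert (G := GP_infinite q). rewrite Rabs_pos_eq in G by lra. specialize (G (proj2 Hq)).
  intros eps Heps.
  assert (HM : 0 < Rabs M + 1) by (generalize (Rabs_pos M); lra).
  destruct (G (eps / (Rabs M + 1))) as [N HN]. { apply Rdiv_lt_0_compat; lra. }
  exists N. intros n Hn. specialize (HN n Hn). unfold Rdist, R_dist in *.
  assert (E : sum_f_R0 (fun m => M * q ^ m) n = M * sum_f_R0 (fun k => 1 * q ^ k) n).
  { rewrite scal_sum. apply sum_eq. intros; ring. }
  rewrite E. replace (M * sum_f_R0 (fun k => 1 * q ^ k) n - M * / (1 - q)) with
    (M * (sum_f_R0 (fun k => 1 * q ^ k) n - / (1 - q))) by ring.
  rewrite Rabs_mult. apply Rle_lt_trans with (Rabs M * (eps / (Rabs M + 1))).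
  { apply Rmult_le_compat_l. apply Rabs_pos. lra. }
  unfold Rdiv. rewrite <- Rmult_assoc. apply Rmult_lt_reg_r with (Rabs M + 1). lra.
  rewrite Rmult_assoc, Rinv_l by lra. generalize (Rabs_pos M). nra.
Qed.

Lemma ser_geom_dominated_conv (u : nat -> Cplx) M q : 0 <= q < 1 ->
  (forall m, Cabs (u m) <= M * q ^ m) -> exists w, ser_has_sum u w.
Proof.
  intros Hq Hu.
  destruct (real_geom_dominated_conv (fun m => fst (u m)) M q Hq) as [l1 H1].
  { intro m. eapply Rle_trans. apply Cabs_fst. apply Hu. }
  destruct (real_geom_dominated_conv (fun m => snd (u m)) M q Hq) as [l2 H2].
  { intro m. eapply Rle_trans. apply Cabs_snd. apply Hu. }
  exists (l1, l2). split; cbn [fst snd].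
  - eapply Un_cv_eventually with (N0 := O); [| exact H1]. intros n _. apply csum_fst.
  - eapply Un_cv_eventually with (N0 := O); [| exact H2]. intros n _. apply csum_snd.
Qed.

Lemma ser_limit_bound u w z B : ser_has_sum u w -> 0 <= B ->
  (forall n, Cabs (Csub (csum (S n) u) z) <= B) -> Cabs (Csub w z) <= B.
Proof.
  intros [H1 H2] HB Hb.
  assert (Hn : Cnorm2 (Csub w z) <= B * B).
  { apply Rle_cv_lim with (Un := fun n => Cnorm2 (Csub (csum (S n) u) z)) (Vn := fun n => B * B).
    - intro n. rewrite <- Cabs_sq. specialize (Hb n).
      generalize (Cabs_ge0 (Csub (csum (S n) u) z)). nra.
    - unfold Cnorm2, Csub, Cadd, Copp; simpl.
      apply CV_plus; apply CV_mult; apply CV_plus; auto; apply Un_cv_const.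
    - apply Un_cv_const. }
  rewrite <- Cabs_sq in Hn. generalize (Cabs_ge0 (Csub w z)). nra.
Qed.

Lemma cv_bounded (U : nat -> R) l : Un_cv U l -> exists B, forall n, Rabs (U n) <= B.
Proof.
  intros H. destruct (H 1 Rlt_0_1) as [N HN].
  exists (Rabs l + 1 + rsum N (fun k => Rabs (U k))). intro n.
  assert (Hp : forall k, 0 <= rsum k (fun k => Rabs (U k)))
    by (intro; apply rsum_nonneg; intro; apply Rabs_pos).
  destruct (le_lt_dec N n) as [Hn|Hn].
  - specialize (HN n Hn). unfold Rdist, R_dist in HN. specialize (Hp N).
    assert (Rabs (U n) <= Rabs (U n - l) + Rabs l)
      by (replace (U n) with ((U n - l) + l) at 1 by ring; apply Rabs_triang).
    lra.
  - assert (Rabs (U n) <= rsum N (fun k => Rabs (U k))).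
    { clear HN. induction N. lia. simpl. destruct (Nat.eq_dec n N).
      - subst. generalize (Hp N). lra.
      - assert (n < N)%nat by lia. specialize (IHN H0). generalize (Rabs_pos (U N)). lra. }
    generalize (Rabs_pos l). lra.
Qed.

Lemma ser_term_bounded u w : ser_has_sum u w -> exists M, forall m, Cabs (u m) <= M.
Proof.
  intros [H1 H2]. destruct (cv_bounded _ _ H1) as [B1 HB1]. destruct (cv_bounded _ _ H2) as [B2 HB2].
  exists (2 * B1 + 2 * B2). intro m. eapply Rle_trans. apply Cabs_le_parts.
  destruct m.
  - specialize (HB1 O). specialize (HB2 O). simpl in HB1, HB2. unfold C0 in *; simpl in *.
    rewrite Rplus_0_l in HB1, HB2. generalize (Rabs_pos (fst (u O))) (Rabs_pos (snd (u O))). lra.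
  - assert (E1 : fst (u (S m)) = fst (csum (S (S m)) u) - fst (csum (S m) u)) by (simpl; ring).
    assert (E2 : snd (u (S m)) = snd (csum (S (S m)) u) - snd (csum (S m) u)) by (simpl; ring).
    rewrite E1, E2.
    generalize (Rabs_triang (fst (csum (S (S m)) u)) (- fst (csum (S m) u)))
               (Rabs_triang (snd (csum (S (S m)) u)) (- snd (csum (S m) u))).
    rewrite !Rabs_Ropp. unfold Rminus.
    generalize (HB1 (S m)) (HB1 m) (HB2 (S m)) (HB2 m). lra.
Qed.

(** * Convergent power series *)

(* Cauchy estimate: on every smaller radius the terms [|a m| c^m] stay bounded.
   This is equivalent to convergence on the open disc of radius [rho]. *)
Definition coef_bound (a : nat -> Cplx) (rho : R) : Prop :=
  forall c, 0 < c < rho -> exists M, forall m, Cabs (a m) * c ^ m <= M.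

Lemma conv_coef_bound a rho : ps_conv_on a rho -> coef_bound a rho.
Proof.
  intros H c Hc. destruct (H (c, 0)) as [w Hw]. { unfold Cnorm2; simpl; nra. }
  apply ps_has_sum_ser in Hw. destruct (ser_term_bounded _ _ Hw) as [M HM]. exists M. intro m.
  specialize (HM m). rewrite Cabs_mul, Cabs_pow, Cabs_real, Rabs_pos_eq in HM by lra. auto.
Qed.

Lemma coef_bound_dominated a rho s : 0 < rho -> coef_bound a rho -> Cnorm2 s < rho * rho ->
  exists M q, 0 <= q < 1 /\ forall m, Cabs (Cmul (a m) (Cpow s m)) <= M * q ^ m.
Proof.
  intros Hr Hc Hs. assert (Ha := Cabs_lt_of_norm2 _ _ Hr Hs). assert (H0 := Cabs_ge0 s).
  set (c := (Cabs s + rho) / 2).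
  assert (Hc0 : 0 < c) by (unfold c; lra). assert (Hcr : c < rho) by (unfold c; lra).
  destruct (Hc c (conj Hc0 Hcr)) as [M HM].
  exists M, (Cabs s / c). split.
  { split. - unfold Rdiv; apply Rmult_le_pos; [lra | apply Rlt_le, Rinv_0_lt_compat; lra].
           - apply Rmult_lt_reg_r with c. lra. unfold Rdiv. rewrite Rmult_assoc, Rinv_l by lra.
             unfold c. lra. }
  intro m. specialize (HM m).
  rewrite Cabs_mul, Cabs_pow. unfold Rdiv. rewrite Rpow_mult_distr.
  assert (Hcm : 0 < c ^ m) by (apply pow_lt; lra).
  replace (Cabs (a m) * Cabs s ^ m) with ((Cabs (a m) * c ^ m) * (Cabs s ^ m * / c ^ m))
    by (field; lra).
  rewrite pow_inv. apply Rmult_le_compat_r; auto.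
  apply Rmult_le_pos. apply pow_le; lra. apply Rlt_le, Rinv_0_lt_compat, pow_lt; lra.
Qed.

Lemma coef_bound_conv a rho : 0 < rho -> coef_bound a rho -> ps_conv_on a rho.
Proof.
  intros Hr Hc s Hs. destruct (coef_bound_dominated a rho s Hr Hc Hs) as [M [q [Hq Hd]]].
  destruct (ser_geom_dominated_conv _ M q Hq Hd) as [w Hw]. exists w. now apply ps_has_sum_ser.
Qed.

Lemma conv_dominated a rho s : 0 < rho -> ps_conv_on a rho -> Cnorm2 s < rho * rho ->
  exists M q, 0 <= q < 1 /\ forall m, Cabs (Cmul (a m) (Cpow s m)) <= M * q ^ m.
Proof. intros Hr Hc Hs. apply coef_bound_dominated with rho; auto. now apply conv_coef_bound. Qed.

Lemma conv_mono a rho rho' : ps_conv_on a rho -> 0 < rho' <= rho -> ps_conv_on a rho'.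
Proof. intros H Hr s Hs. apply H. nra. Qed.

Lemma ps_eval_spec a rho s : 0 < rho -> ps_conv_on a rho -> Cnorm2 s < rho * rho ->
  ps_has_sum a s (ps_eval a s).
Proof. intros Hr Hc Hs. unfold ps_eval. apply epsilon_spec. now apply Hc. Qed.

Lemma ps_eval_eq a s w : ps_has_sum a s w -> ps_eval a s = w.
Proof.
  intros H. unfold ps_eval. apply (ser_unique (fun m => Cmul (a m) (Cpow s m)));
    apply ps_has_sum_ser; auto. apply epsilon_spec. eauto.
Qed.

Definition cadd (a b : nat -> Cplx) (m : nat) : Cplx := Cadd (a m) (b m).
Definition cscal (c : Cplx) (a : nat -> Cplx) (m : nat) : Cplx := Cmul c (a m).

Lemma ser_add u v U V :
  ser_has_sum u U -> ser_has_sum v V -> ser_has_sum (fun m => Cadd (u m) (v m)) (Cadd U V).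
Proof.
  intros [H1 H2] [H3 H4]. split.
  - eapply (Un_cv_eventually _ _ _ O). 2: apply CV_plus; [exact H1 | exact H3].
    intros n _. cbv beta. now rewrite csum_add.
  - eapply (Un_cv_eventually _ _ _ O). 2: apply CV_plus; [exact H2 | exact H4].
    intros n _. cbv beta. now rewrite csum_add.
Qed.

Lemma ser_scal u U c : ser_has_sum u U -> ser_has_sum (fun m => Cmul c (u m)) (Cmul c U).
Proof.
  intros [H1 H2]. destruct c as [c1 c2]. split.
  - eapply (Un_cv_eventually _ _ _ O).
    2: apply CV_minus; apply CV_mult; [apply Un_cv_const | exact H1 | apply Un_cv_const | exact H2].
    intros n _. cbv beta. rewrite csum_mull. reflexivity.
  - eapply (Un_cv_eventually _ _ _ O).
    2: apply CV_plus; apply CV_mult; [apply Un_cv_const | exact H2 | apply Un_cv_const | exact H1].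
    intros n _. cbv beta. rewrite csum_mull. reflexivity.
Qed.

Lemma cadd_conv a b rho : 0 < rho -> ps_conv_on a rho -> ps_conv_on b rho ->
  ps_conv_on (cadd a b) rho /\
  forall s, Cnorm2 s < rho * rho -> ps_eval (cadd a b) s = Cadd (ps_eval a s) (ps_eval b s).
Proof.
  intros Hr Ha Hb.
  assert (K : forall s, Cnorm2 s < rho * rho ->
            ps_has_sum (cadd a b) s (Cadd (ps_eval a s) (ps_eval b s))).
  { intros s Hs. apply ps_has_sum_ser. eapply ser_ext.
    2: apply ser_add; apply ps_has_sum_ser; eapply ps_eval_spec; eauto.
    intro m. unfold cadd. cplx_ring. }
  split; intros s Hs. - eexists; eauto. - apply ps_eval_eq; auto.
Qed.

Lemma cscal_conv c a rho : 0 < rho -> ps_conv_on a rho ->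
  ps_conv_on (cscal c a) rho /\
  forall s, Cnorm2 s < rho * rho -> ps_eval (cscal c a) s = Cmul c (ps_eval a s).
Proof.
  intros Hr Ha.
  assert (K : forall s, Cnorm2 s < rho * rho -> ps_has_sum (cscal c a) s (Cmul c (ps_eval a s))).
  { intros s Hs. apply ps_has_sum_ser. eapply ser_ext.
    2: apply ser_scal; apply ps_has_sum_ser; eapply ps_eval_spec; eauto.
    intro m. unfold cscal. cplx_ring. }
  split; intros s Hs. - eexists; eauto. - apply ps_eval_eq; auto.
Qed.

(** Products of convergent power series (Mertens' theorem in the geometrically
    dominated case). *)

Lemma n_geom_bounded r : 0 < r < 1 -> exists C, 0 <= C /\ forall n, INR n * r ^ n <= C.
Proof.
  intros Hr. set (h := / r - 1). assert (Hh : 0 < h).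
  { unfold h. assert (1 < / r) by (rewrite <- Rinv_1; apply Rinv_lt_contravar; lra). lra. }
  exists (/ h). split. { left; now apply Rinv_0_lt_compat. } intro n.
  assert (B := poly n h Hh). replace (1 + h) with (/ r) in B by (unfold h; ring).
  rewrite pow_inv in B. assert (Hrn : 0 < r ^ n) by (apply pow_lt; lra).
  assert (INR n * h <= / r ^ n) by lra.
  apply Rmult_le_reg_r with h; auto. rewrite Rinv_l by lra.
  apply Rmult_le_reg_l with (/ r ^ n). { now apply Rinv_0_lt_compat. }
  replace (/ r ^ n * (INR n * r ^ n * h)) with (INR n * h) by (field; lra). lra.
Qed.

(* [n^2 q^n -> 0] for [0 <= q < 1]: write [q <= (r^n)^2 * sqrt((1+q)/2)^n] with [r^4 = (1+q)/2]. *)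
Lemma n2_geom_cv0 q : 0 <= q < 1 -> Un_cv (fun n => INR n * INR n * q ^ n) 0.
Proof.
  intros Hq. set (r4 := (1 + q) / 2). set (r := sqrt (sqrt r4)).
  assert (Hr4 : 0 < r4 < 1) by (unfold r4; lra).
  assert (Hr2 : r * r = sqrt r4) by (unfold r; apply sqrt_sqrt; apply sqrt_pos).
  assert (Hr4' : sqrt r4 * sqrt r4 = r4) by (apply sqrt_sqrt; lra).
  assert (Hs0 : 0 < sqrt r4) by (apply sqrt_lt_R0; lra).
  assert (Hs1 : sqrt r4 < 1) by (rewrite <- sqrt_1; apply sqrt_lt_1; lra).
  assert (Hr0 : 0 < r) by (unfold r; apply sqrt_lt_R0; lra).
  assert (Hr1 : r < 1) by (unfold r; rewrite <- sqrt_1; apply sqrt_lt_1; lra).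
  destruct (n_geom_bounded r (conj Hr0 Hr1)) as [C [HC0 HC]].
  intros eps Heps.
  destruct (pow_lt_1_zero (sqrt r4)) with (y := eps / (C * C + 1)) as [N HN].
  { rewrite Rabs_pos_eq; lra. } { apply Rdiv_lt_0_compat; nra. }
  exists N. intros n Hn. specialize (HN n Hn). rewrite Rabs_pos_eq in HN by (apply pow_le; lra).
  unfold Rdist, R_dist. rewrite Rminus_0_r.
  assert (Hq' : q ^ n <= (r ^ n * r ^ n) * sqrt r4 ^ n).
  { rewrite <- Rpow_mult_distr, Hr2, <- Rpow_mult_distr, Hr4'. apply pow_incr. unfold r4; lra. }
  assert (HI : 0 <= INR n) by apply pos_INR.
  assert (H1 : 0 <= INR n * r ^ n) by (apply Rmult_le_pos; auto; apply pow_le; lra).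
  assert (H2 : 0 <= sqrt r4 ^ n) by (apply pow_le; lra).
  assert (H3 : 0 <= q ^ n) by (apply pow_le; lra).
  rewrite Rabs_pos_eq by (apply Rmult_le_pos; [nra | lra]).
  apply Rle_lt_trans with ((INR n * r ^ n) * (INR n * r ^ n) * sqrt r4 ^ n).
  { replace ((INR n * r ^ n) * (INR n * r ^ n) * sqrt r4 ^ n)
      with (INR n * INR n * ((r ^ n * r ^ n) * sqrt r4 ^ n)) by ring.
    apply Rmult_le_compat_l; nra. }
  apply Rle_lt_trans with (C * C * sqrt r4 ^ n).
  { apply Rmult_le_compat_r; auto. specialize (HC n). nra. }
  apply Rle_lt_trans with ((C * C + 1) * sqrt r4 ^ n). nra.
  apply Rmult_lt_reg_l with (/ (C * C + 1)). { apply Rinv_0_lt_compat; nra. }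
  rewrite <- Rmult_assoc, Rinv_l by nra. unfold Rdiv in HN. nra.
Qed.

Definition cauchy_partial (A B : nat -> R) (N : nat) : R :=
  sum_f_R0 (fun k => sum_f_R0 (fun p => A p * B (k - p)%nat) k) N.

(* The defect between the product of partial sums and the partial Cauchy
   product, as given by [cauchy_finite]. *)
Definition cauchy_defect (A B : nat -> R) (N : nat) : R :=
  sum_f_R0 (fun k => sum_f_R0 (fun l => A (S (l + k)) * B (N - l)%nat) (pred (N - k))) (pred N).

Lemma cauchy_defect_bound (A B : nat -> R) M q N : 0 <= q < 1 -> 0 <= M -> (1 <= N)%nat ->
  (forall p, Rabs (A p) <= M * q ^ p) -> (forall p, Rabs (B p) <= M * q ^ p) ->
  Rabs (cauchy_defect A B N) <= M * M * (INR N * INR N * q ^ N).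
Proof.
  intros Hq HM HN HA HB.
  assert (Hqa : forall a b, (b <= a)%nat -> q ^ a <= q ^ b).
  { intros a b Hab. replace a with (b + (a - b))%nat by lia. rewrite pow_add.
    assert (0 <= q ^ b) by (apply pow_le; lra).
    assert (q ^ (a - b) <= 1) by (rewrite <- (pow1 (a - b)); apply pow_incr; lra). nra. }
  unfold cauchy_defect. eapply Rle_trans. apply sum_f_R0_triangle.
  apply Rle_trans with (sum_f_R0 (fun k => M * M * q ^ N * INR N) (pred N)).
  - apply sum_Rle. intros k Hk. eapply Rle_trans. apply sum_f_R0_triangle.
    apply Rle_trans with (sum_f_R0 (fun l => M * M * q ^ N) (pred (N - k))).
    + apply sum_Rle. intros l Hl. rewrite Rabs_mult.
      apply Rle_trans with ((M * q ^ (S (l + k))) * (M * q ^ (N - l)%nat)).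
      { apply Rmult_le_compat; auto using Rabs_pos. }
      replace ((M * q ^ (S (l + k))) * (M * q ^ (N - l)%nat))
        with (M * M * (q ^ (S (l + k)) * q ^ (N - l)%nat)) by ring.
      apply Rmult_le_compat_l. nra. rewrite <- pow_add. apply Hqa. lia.
    + rewrite sum_cte. apply Rmult_le_compat_l.
      { assert (0 <= q ^ N) by (apply pow_le; lra). nra. }
      apply le_INR. lia.
  - rewrite sum_cte. replace (S (pred N)) with N by lia. right; ring.
Qed.

Lemma real_mertens (A B : nat -> R) M q LA LB : 0 <= q < 1 ->
  (forall p, Rabs (A p) <= M * q ^ p) -> (forall p, Rabs (B p) <= M * q ^ p) ->
  Un_cv (fun n => sum_f_R0 A n) LA -> Un_cv (fun n => sum_f_R0 B n) LB ->
  Un_cv (cauchy_partial A B) (LA * LB).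
Proof.
  intros Hq HA HB HLA HLB.
  assert (HM : 0 <= M) by (specialize (HA O); simpl in HA; generalize (Rabs_pos (A O)); lra).
  apply Un_cv_eventually with (N0 := 1%nat)
    (V := fun N => sum_f_R0 A N * sum_f_R0 B N - cauchy_defect A B N).
  { intros n Hn. unfold cauchy_partial, cauchy_defect. rewrite (cauchy_finite A B n) by lia. ring. }
  replace (LA * LB) with (LA * LB - 0) by ring. apply CV_minus. { now apply CV_mult. }
  intros eps Heps. destruct (n2_geom_cv0 q Hq (eps / (M * M + 1))) as [N HN].
  { apply Rdiv_lt_0_compat; nra. }
  exists (max N 1). intros n Hn. specialize (HN n ltac:(lia)).
  assert (Hb := cauchy_defect_bound A B M q n Hq HM ltac:(lia) HA HB).
  unfold Rdist, R_dist in *. rewrite Rminus_0_r in *.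
  assert (H0 : 0 <= INR n * INR n * q ^ n)
    by (apply Rmult_le_pos; [apply Rmult_le_pos; apply pos_INR | apply pow_le; lra]).
  rewrite Rabs_pos_eq in HN by auto.
  apply Rle_lt_trans with (M * M * (INR n * INR n * q ^ n)); auto.
  apply Rle_lt_trans with ((M * M + 1) * (INR n * INR n * q ^ n)). nra.
  apply Rmult_lt_reg_l with (/ (M * M + 1)). { apply Rinv_0_lt_compat; nra. }
  rewrite <- Rmult_assoc, Rinv_l by nra. unfold Rdiv in HN. nra.
Qed.

Definition cprod (a b : nat -> Cplx) (m : nat) : Cplx :=
  csum (S m) (fun l => Cmul (a l) (b (m - l)%nat)).

Lemma cprod_term a b s k : Cmul (cprod a b k) (Cpow s k) =
  csum (S k) (fun p => Cmul (Cmul (a p) (Cpow s p)) (Cmul (b (k - p)%nat) (Cpow s (k - p)%nat))).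
Proof.
  unfold cprod. rewrite Cmul_comm, <- csum_mull. apply csum_ext. intros p Hp.
  replace (Cpow s k) with (Cmul (Cpow s p) (Cpow s (k - p)%nat)).
  - cplx_ring.
  - rewrite <- Cpow_add. f_equal. lia.
Qed.

Lemma cprod_has_sum a b s A B M q : 0 <= q < 1 ->
  (forall m, Cabs (Cmul (a m) (Cpow s m)) <= M * q ^ m) ->
  (forall m, Cabs (Cmul (b m) (Cpow s m)) <= M * q ^ m) ->
  ps_has_sum a s A -> ps_has_sum b s B -> ps_has_sum (cprod a b) s (Cmul A B).
Proof.
  intros Hq Ha Hb HA HB. unfold ps_has_sum, ps_partial in HA, HB. apply ps_has_sum_ser.
  set (u := fun m => Cmul (a m) (Cpow s m)) in *. set (v := fun m => Cmul (b m) (Cpow s m)) in *.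
  destruct HA as [HA1 HA2]. destruct HB as [HB1 HB2].
  assert (Du1 : forall p, Rabs (fst (u p)) <= M * q ^ p)
    by (intro; eapply Rle_trans; [apply Cabs_fst | apply Ha]).
  assert (Du2 : forall p, Rabs (snd (u p)) <= M * q ^ p)
    by (intro; eapply Rle_trans; [apply Cabs_snd | apply Ha]).
  assert (Dv1 : forall p, Rabs (fst (v p)) <= M * q ^ p)
    by (intro; eapply Rle_trans; [apply Cabs_fst | apply Hb]).
  assert (Dv2 : forall p, Rabs (snd (v p)) <= M * q ^ p)
    by (intro; eapply Rle_trans; [apply Cabs_snd | apply Hb]).
  assert (SA1 : Un_cv (fun n => sum_f_R0 (fun p => fst (u p)) n) (fst A))
    by (eapply (Un_cv_eventually _ _ _ O); [| exact HA1]; intros; cbv beta; now rewrite csum_fst).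
  assert (SA2 : Un_cv (fun n => sum_f_R0 (fun p => snd (u p)) n) (snd A))
    by (eapply (Un_cv_eventually _ _ _ O); [| exact HA2]; intros; cbv beta; now rewrite csum_snd).
  assert (SB1 : Un_cv (fun n => sum_f_R0 (fun p => fst (v p)) n) (fst B))
    by (eapply (Un_cv_eventually _ _ _ O); [| exact HB1]; intros; cbv beta; now rewrite csum_fst).
  assert (SB2 : Un_cv (fun n => sum_f_R0 (fun p => snd (v p)) n) (snd B))
    by (eapply (Un_cv_eventually _ _ _ O); [| exact HB2]; intros; cbv beta; now rewrite csum_snd).
  split.
  - apply Un_cv_eventually with (N0 := O) (V := fun N =>
      cauchy_partial (fun p => fst (u p)) (fun p => fst (v p)) N
      - cauchy_partial (fun p => snd (u p)) (fun p => snd (v p)) N).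
    + intros N _. rewrite csum_fst. unfold cauchy_partial. rewrite <- minus_sum.
      apply sum_eq. intros k Hk. rewrite cprod_term, csum_fst, <- minus_sum.
      apply sum_eq. intros p Hp. reflexivity.
    + simpl. apply CV_minus; eapply real_mertens; eauto.
  - apply Un_cv_eventually with (N0 := O) (V := fun N =>
      cauchy_partial (fun p => fst (u p)) (fun p => snd (v p)) N
      + cauchy_partial (fun p => snd (u p)) (fun p => fst (v p)) N).
    + intros N _. rewrite csum_snd. unfold cauchy_partial. rewrite <- sum_plus.
      apply sum_eq. intros k Hk. rewrite cprod_term, csum_snd, <- sum_plus.
      apply sum_eq. intros p Hp. reflexivity.
    + simpl. apply CV_plus; eapply real_mertens; eauto.
Qed.

Lemma geom_dominated_join (u v : nat -> Cplx) M1 q1 M2 q2 : 0 <= q1 < 1 -> 0 <= q2 < 1 ->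
  (forall m, Cabs (u m) <= M1 * q1 ^ m) -> (forall m, Cabs (v m) <= M2 * q2 ^ m) ->
  exists M q, 0 <= q < 1 /\ (forall m, Cabs (u m) <= M * q ^ m) /\ (forall m, Cabs (v m) <= M * q ^ m).
Proof.
  intros H1 H2 Hu Hv. exists (Rmax M1 M2), (Rmax q1 q2).
  split. { unfold Rmax; destruct Rle_dec; lra. }
  assert (HM1 : 0 <= M1) by (specialize (Hu O); simpl in Hu; generalize (Cabs_ge0 (u O)); lra).
  assert (HM2 : 0 <= M2) by (specialize (Hv O); simpl in Hv; generalize (Cabs_ge0 (v O)); lra).
  split; intro m.
  - eapply Rle_trans. apply Hu. apply Rmult_le_compat; auto. apply pow_le; lra. apply Rmax_l.
    apply pow_incr. split. lra. apply Rmax_l.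
  - eapply Rle_trans. apply Hv. apply Rmult_le_compat; auto. apply pow_le; lra. apply Rmax_r.
    apply pow_incr. split. lra. apply Rmax_r.
Qed.

Lemma cprod_conv a b rho : 0 < rho -> ps_conv_on a rho -> ps_conv_on b rho ->
  ps_conv_on (cprod a b) rho /\
  forall s, Cnorm2 s < rho * rho -> ps_eval (cprod a b) s = Cmul (ps_eval a s) (ps_eval b s).
Proof.
  intros Hr Ha Hb.
  assert (K : forall s, Cnorm2 s < rho * rho ->
            ps_has_sum (cprod a b) s (Cmul (ps_eval a s) (ps_eval b s))).
  { intros s Hs. destruct (conv_dominated a rho s Hr Ha Hs) as [M1 [q1 [Hq1 H1]]].
    destruct (conv_dominated b rho s Hr Hb Hs) as [M2 [q2 [Hq2 H2]]].
    destruct (geom_dominated_join _ _ _ _ _ _ Hq1 Hq2 H1 H2) as [M [q [Hq [D1 D2]]]].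
    eapply cprod_has_sum; eauto; eapply ps_eval_spec; eauto. }
  split; intros s Hs. - eexists; eauto. - apply ps_eval_eq; auto.
Qed.

Lemma fin_has_sum a K s : (forall m, (K <= m)%nat -> a m = C0) ->
  ps_has_sum a s (csum K (fun m => Cmul (a m) (Cpow s m))).
Proof.
  intros H. apply ps_has_sum_ser.
  assert (E : forall N, (K <= N)%nat -> csum (S N) (fun m => Cmul (a m) (Cpow s m))
                                     = csum K (fun m => Cmul (a m) (Cpow s m))).
  { intros N HN. apply csum_trailing_zero; [| lia]. intros m Hm. rewrite H by auto. apply Cmul_0l. }
  split; eapply Un_cv_eventually with (N0 := K); try apply Un_cv_const; intros n Hn; now rewrite E.
Qed.

Lemma fin_conv a K rho : (forall m, (K <= m)%nat -> a m = C0) -> ps_conv_on a rho.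
Proof. intros H s Hs. eexists. now apply (fin_has_sum a K). Qed.

Lemma fin_eval a K s : (forall m, (K <= m)%nat -> a m = C0) ->
  ps_eval a s = csum K (fun m => Cmul (a m) (Cpow s m)).
Proof. intros H. apply ps_eval_eq. now apply fin_has_sum. Qed.

(* [sh n a] is the series [a] divided by [t^n] (dropping the first [n] terms);
   [tn n] is the monomial [t^n]. *)
Definition sh (n : nat) (a : nat -> Cplx) (m : nat) : Cplx := a (m + n)%nat.
Definition tn (n : nat) (m : nat) : Cplx := if Nat.eqb m n then Defs.C1 else C0.

Lemma tn_support n m : (S n <= m)%nat -> tn n m = C0.
Proof. intros Hm. unfold tn. destruct (Nat.eqb_spec m n); [lia | auto]. Qed.

Lemma sh_conv n a rho : 0 < rho -> ps_conv_on a rho -> ps_conv_on (sh n a) rho.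
Proof.
  intros Hr H. apply coef_bound_conv; auto. intros c Hc.
  destruct (conv_coef_bound a rho H c Hc) as [M HM]. exists (M / c ^ n). intro m. unfold sh.
  assert (0 < c ^ n) by (apply pow_lt; lra). specialize (HM (m + n)%nat). rewrite pow_add in HM.
  unfold Rdiv. apply Rmult_le_reg_r with (c ^ n); auto.
  replace (M * / c ^ n * c ^ n) with M by (field; lra). nra.
Qed.

Lemma tn_eval n s : ps_eval (tn n) s = Cpow s n.
Proof.
  rewrite (fin_eval (tn n) (S n)) by apply tn_support. simpl. rewrite csum_zero.
  - unfold tn. rewrite Nat.eqb_refl, Cadd_0l, Cmul_1l. auto.
  - intros m Hm. unfold tn. destruct (Nat.eqb_spec m n); [lia | apply Cmul_0l].
Qed.

Lemma cprod_tn n a : (forall m, (m < n)%nat -> a m = C0) -> cprod (tn n) (sh n a) = a.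
Proof.
  intros H. apply functional_extensionality. intro m. unfold cprod.
  destruct (le_lt_dec n m) as [Hm|Hm].
  - replace (S m) with (S n + (m - n))%nat by lia.
    assert (Split : forall k f, csum (S n + k) f
                              = Cadd (csum (S n) f) (csum k (fun j => f (S n + j)%nat))).
    { induction k as [|k IHk]; intros f.
      - rewrite Nat.add_0_r. simpl. now rewrite Cadd_0r.
      - replace (S n + S k)%nat with (S (S n + k)) by lia.
        change (csum (S (S n + k)) f) with (Cadd (csum (S n + k) f) (f (S n + k)%nat)).
        rewrite (IHk f). rewrite <- Cadd_assoc. f_equal. }
    rewrite Split, (csum_zero (m - n)), Cadd_0r. simpl. rewrite csum_zero.
    + unfold tn. rewrite Nat.eqb_refl, Cadd_0l, Cmul_1l. unfold sh. f_equal. lia.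
    + intros k Hk. unfold tn. destruct (Nat.eqb_spec k n); [lia | apply Cmul_0l].
    + intros k Hk. rewrite tn_support by lia. apply Cmul_0l.
  - rewrite H by auto. apply csum_zero. intros k Hk. unfold tn.
    destruct (Nat.eqb_spec k n); [lia | apply Cmul_0l].
Qed.

Lemma shift_eval n a rho s : 0 < rho -> ps_conv_on a rho -> (forall m, (m < n)%nat -> a m = C0) ->
  Cnorm2 s < rho * rho -> ps_eval a s = Cmul (Cpow s n) (ps_eval (sh n a) s).
Proof.
  intros Hr Ha H Hs. rewrite <- (cprod_tn n a H) at 1.
  destruct (cprod_conv (tn n) (sh n a) rho Hr) as [_ E].
  - apply fin_conv with (S n). apply tn_support.
  - now apply sh_conv.
  - rewrite E, tn_eval; auto.
Qed.

Lemma least_nonzero (a : nat -> Cplx) : (exists m, a m <> C0) ->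
  exists n, a n <> C0 /\ forall m, (m < n)%nat -> a m = C0.
Proof.
  intros [m Hm]. revert Hm. induction m as [m IH] using (well_founded_induction Wf_nat.lt_wf).
  intros Hm. destruct (classic (exists k, (k < m)%nat /\ a k <> C0)) as [[k [Hk1 Hk2]] | Hno].
  - apply (IH k Hk1 Hk2).
  - exists m. split; auto. intros k Hk. apply NNPP. intro. apply Hno. eauto.
Qed.

Lemma ser_near_constant_term h s w M t : 0 <= t <= 1/2 ->
  (forall m, Cabs (Cmul (h m) (Cpow s m)) <= M * t ^ m) ->
  ps_has_sum h s w -> Cabs (Csub w (h O)) <= 2 * M * t.
Proof.
  intros Ht Dom Hw. apply ps_has_sum_ser in Hw.
  assert (HM : 0 <= M) by (specialize (Dom O); simpl in Dom; generalize (Cabs_ge0 (Cmul (h O) Defs.C1)); nra).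
  apply ser_limit_bound with (u := fun m => Cmul (h m) (Cpow s m)); auto. { nra. }
  intro N. rewrite csum_first.
  replace (Csub (Cadd (Cmul (h O) (Cpow s O)) (csum N (fun m => Cmul (h (S m)) (Cpow s (S m))))) (h O))
    with (csum N (fun m => Cmul (h (S m)) (Cpow s (S m))))
    by (generalize (h O) (csum N (fun m => Cmul (h (S m)) (Cpow s (S m)))); simpl; intros; cplx_ring).
  eapply Rle_trans. apply Cabs_csum.
  apply Rle_trans with (rsum N (fun m => (M * t) * t ^ m)).
  { apply rsum_le. intros m _. replace (M * t * t ^ m) with (M * t ^ (S m)) by (simpl; ring). apply Dom. }
  rewrite rsum_scal. apply Rle_trans with (M * t * / (1 - t)).
  { apply Rmult_le_compat_l. nra. apply rsum_geom; lra. }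
  assert (Hi : / (1 - t) <= 2) by (apply Rmult_le_reg_r with (1 - t); [lra | rewrite Rinv_l by lra; lra]).
  assert (0 <= M * t) by nra. nra.
Qed.

Lemma ps_nonzero_near_origin h rho : 0 < rho -> ps_conv_on h rho -> h O <> C0 ->
  exists x, 0 < x < rho /\ ps_eval h (x, 0) <> C0.
Proof.
  intros Hr Hc H0. set (c := rho / 2). assert (Hc0 : 0 < c < rho) by (unfold c; lra).
  destruct (conv_coef_bound h rho Hc c Hc0) as [M HM].
  assert (HM0 : 0 <= M) by (specialize (HM O); simpl in HM; generalize (Cabs_ge0 (h O)); nra).
  assert (Hh : 0 < Cabs (h O))
    by (destruct (Cabs_ge0 (h O)); auto; exfalso; apply H0, Cabs_eq0; auto).
  set (x := Rmin (c / 2) (Cabs (h O) * c / (4 * (M + 1)))).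
  assert (Hx0 : 0 < x) by (apply Rmin_pos; [lra | apply Rdiv_lt_0_compat; nra]).
  assert (Hx1 : x <= c / 2) by apply Rmin_l.
  assert (Hx2 : x <= Cabs (h O) * c / (4 * (M + 1))) by apply Rmin_r.
  exists x. split. { lra. }
  set (t := x / c).
  assert (Ht : 0 < t <= 1/2).
  { unfold t. split. - apply Rdiv_lt_0_compat; lra.
    - apply Rmult_le_reg_r with c. lra. unfold Rdiv. rewrite Rmult_assoc, Rinv_l by lra. lra. }
  assert (Dom : forall m, Cabs (Cmul (h m) (Cpow (x, 0) m)) <= M * t ^ m).
  { intro m. rewrite Cabs_mul, Cabs_pow, Cabs_real, Rabs_pos_eq by lra. specialize (HM m).
    unfold t, Rdiv. rewrite Rpow_mult_distr, pow_inv. assert (0 < c ^ m) by (apply pow_lt; lra).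
    replace (Cabs (h m) * x ^ m) with ((Cabs (h m) * c ^ m) * (x ^ m * / c ^ m)) by (field; lra).
    apply Rmult_le_compat_r; auto.
    apply Rmult_le_pos. apply pow_le; lra. now apply Rlt_le, Rinv_0_lt_compat. }
  assert (Hs : Cnorm2 (x, 0) < rho * rho) by (unfold Cnorm2; simpl; nra).
  assert (Near := ser_near_constant_term h (x, 0) _ M t ltac:(lra) Dom (ps_eval_spec h rho _ Hr Hc Hs)).
  assert (Small : 2 * M * t < Cabs (h O)).
  { unfold t. apply Rle_lt_trans with (2 * M * (Cabs (h O) / (4 * (M + 1)))).
    - apply Rmult_le_compat_l. lra. apply Rmult_le_reg_r with c. lra.
      unfold Rdiv at 1. rewrite Rmult_assoc, Rinv_l by lra.
      replace (Cabs (h O) / (4 * (M + 1)) * c) with (Cabs (h O) * c / (4 * (M + 1))) by (field; lra).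
      lra.
    - apply Rmult_lt_reg_r with (4 * (M + 1)). lra. unfold Rdiv.
      replace (2 * M * (Cabs (h O) * / (4 * (M + 1))) * (4 * (M + 1))) with (2 * M * Cabs (h O))
        by (field; lra). nra. }
  intro E. rewrite E in Near.
  replace (Csub C0 (h O)) with (Copp (h O)) in Near by (generalize (h O); intros; cplx_ring).
  rewrite Cabs_opp in Near. lra.
Qed.

Lemma ps_zero_on_segment a rho : 0 < rho -> ps_conv_on a rho ->
  (forall x, 0 < x < rho -> ps_eval a (x, 0) = C0) -> forall m, a m = C0.
Proof.
  intros Hr Hc Hzero. apply NNPP. intros Hnz. apply not_all_ex_not in Hnz.
  destruct (least_nonzero a Hnz) as [n [Hn Hlt]].
  destruct (ps_nonzero_near_origin (sh n a) rho Hr (sh_conv n a rho Hr Hc)) as [x [Hx Hsh]].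
  { exact Hn. }
  assert (Hx0 : (x, 0) <> C0) by (intro E; inversion E; lra).
  apply (Cmul_neq0 (Cpow (x, 0) n) _ (Cpow_neq0 _ n Hx0) Hsh).
  rewrite <- (shift_eval n a rho); auto. unfold Cnorm2; simpl; nra.
Qed.

Lemma common_radius (k : nat) (P : nat -> R -> Prop) :
  (forall i rho rho', P i rho -> 0 < rho' <= rho -> P i rho') ->
  (forall i, (i < k)%nat -> exists rho, 0 < rho /\ P i rho) ->
  exists rho, 0 < rho /\ forall i, (i < k)%nat -> P i rho.
Proof.
  intros Hm. induction k; intros H.
  - exists 1. split. lra. intros; lia.
  - destruct IHk as [r1 [Hr1 H1]]. { intros; apply H; lia. }
    destruct (H k) as [r2 [Hr2 H2]]. { lia. }
    exists (Rmin r1 r2). split. { now apply Rmin_pos. } intros i Hi.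
    destruct (Nat.eq_dec i k).
    + subst. eapply Hm; eauto. split. now apply Rmin_pos. apply Rmin_r.
    + eapply Hm. apply H1. lia. split. now apply Rmin_pos. apply Rmin_l.
Qed.

Lemma germ_common_radius a b : is_germ a -> is_germ b ->
  exists rho, 0 < rho /\ ps_conv_on a rho /\ ps_conv_on b rho.
Proof.
  intros [r1 [H1 Ca]] [r2 [H2 Cb]]. exists (Rmin r1 r2). split. { now apply Rmin_pos. }
  split; eapply conv_mono; eauto; (split; [now apply Rmin_pos | ]); [apply Rmin_l | apply Rmin_r].
Qed.

Lemma germ_add a b : is_germ a -> is_germ b -> is_germ (cadd a b).
Proof.
  intros Ha Hb. destruct (germ_common_radius a b Ha Hb) as [r [Hr [H1 H2]]].
  exists r. split; auto. apply (proj1 (cadd_conv a b r Hr H1 H2)).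
Qed.
Lemma germ_mul a b : is_germ a -> is_germ b -> is_germ (cprod a b).
Proof.
  intros Ha Hb. destruct (germ_common_radius a b Ha Hb) as [r [Hr [H1 H2]]].
  exists r. split; auto. apply (proj1 (cprod_conv a b r Hr H1 H2)).
Qed.
Lemma germ_scal c a : is_germ a -> is_germ (cscal c a).
Proof. intros [r [Hr H]]. exists r. split; auto. apply (proj1 (cscal_conv c a r Hr H)). Qed.
Lemma germ_fin a K : (forall m, (K <= m)%nat -> a m = C0) -> is_germ a.
Proof. intros H. exists 1. split. lra. now apply fin_conv with K. Qed.
Lemma germ_sh n a : is_germ a -> is_germ (sh n a).
Proof. intros [r [Hr H]]. exists r. split; auto. now apply sh_conv. Qed.
Lemma germ_tn n : is_germ (tn n).
Proof. apply germ_fin with (S n). apply tn_support. Qed.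

(** * The integral domain of germs *)

From HB Require Import structures.
From mathcomp Require Import all_boot all_algebra zify.
Set Implicit Arguments. Unset Strict Implicit. Unset Printing Implicit Defensive.
Import GRing.Theory.
Close Scope R_scope.
Open Scope ring_scope.

Definition classical_eqb {T : Type} (x y : T) : bool :=
  if excluded_middle_informative (x = y) then true else false.
Lemma classical_eqP {T : Type} : Equality.axiom (@classical_eqb T).
Proof. move=> x y; rewrite /classical_eqb; case: excluded_middle_informative => H; constructor; auto. Qed.

Definition classical_find {T : Type} (P : pred T) (n : nat) : option T :=
  match excluded_middle_informative (exists x, P x) with
  | left H => Some (proj1_sig (constructive_indefinite_description _ H))
  | right _ => None end.
Lemma classical_find_correct {T : Type} (P : pred T) n x : classical_find P n = Some x -> P x.
Proof.
  rewrite /classical_find; case: excluded_middle_informative => // H [<-].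
  exact: (proj2_sig (constructive_indefinite_description _ H)).
Qed.
Lemma classical_find_complete {T : Type} (P : pred T) :
  (exists x, P x) -> exists n, classical_find P n.
Proof. move=> H; exists 0%N; rewrite /classical_find; by case: excluded_middle_informative. Qed.
Lemma classical_find_ext {T : Type} (P Q : pred T) : P =1 Q -> classical_find P =1 classical_find Q.
Proof. move=> E n. by have -> : P = Q by apply: functional_extensionality. Qed.

HB.instance Definition _ := hasDecEq.Build Cplx classical_eqP.
HB.instance Definition _ := hasChoice.Build Cplx
  classical_find_correct classical_find_complete classical_find_ext.

Lemma Cadd_assoc' : associative Cadd. Proof. move=> x y z; exact: Cadd_assoc. Qed.
HB.instance Definition _ := GRing.isZmodule.Build Cplx Cadd_assoc' Cadd_comm Cadd_0l Cadd_oppl.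

Lemma Cmul_assoc' : associative Cmul. Proof. move=> x y z; exact: Cmul_assoc. Qed.
Lemma C1_neq0 : Defs.C1 != C0.
Proof. apply/eqP; rewrite /Defs.C1 /C0 => [[E]]. move: E. exact: R1_neq_R0. Qed.
HB.instance Definition _ :=
  GRing.Zmodule_isComNzRing.Build Cplx Cmul_assoc' Cmul_comm Cmul_1l Cmul_addl C1_neq0.

Lemma csum_big n (f : nat -> Cplx) : csum n f = \sum_(j < n) f j.
Proof. elim: n => [|n IH] /=; first by rewrite big_ord0. by rewrite big_ord_recr /= IH. Qed.

Lemma csum_exchange n k (f : nat -> nat -> Cplx) :
  csum n (fun l => csum k (fun j => f l j)) = csum k (fun j => csum n (fun l => f l j)).
Proof.
  rewrite !csum_big. under eq_bigr do rewrite csum_big. rewrite exchange_big /=.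
  apply: eq_bigr => j _. by rewrite csum_big.
Qed.

(** The Cauchy product is a coefficient of a polynomial product, which gives
    its ring laws for free. *)

Lemma cprod_big a b m : cprod a b m = \sum_(l < m.+1) a l * b (m - l)%N.
Proof. by rewrite /cprod csum_big. Qed.

Definition trunc_poly (N : nat) (a : nat -> Cplx) : {poly Cplx} := \poly_(i < N) a i.

Lemma coefM_low (p q p' q' : {poly Cplx}) m :
  (forall j, (j <= m)%N -> p`_j = p'`_j) -> (forall j, (j <= m)%N -> q`_j = q'`_j) ->
  (p * q)`_m = (p' * q')`_m.
Proof.
  move=> Hp Hq. rewrite !coefM. apply: eq_bigr => [[j Hj]] _ /=.
  by rewrite Hp // Hq // leq_subr.
Qed.

Lemma cprod_poly a b m N : (m < N)%N -> cprod a b m = (trunc_poly N a * trunc_poly N b)`_m.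
Proof.
  move=> HN. rewrite cprod_big coefM. apply: eq_bigr => [[j Hj]] _ /=.
  have Hj' : (j < N)%N by exact: leq_trans Hj HN.
  have Hmj : (m - j < N)%N by exact: leq_ltn_trans (leq_subr _ _) HN.
  by rewrite !coef_poly Hj' Hmj.
Qed.

Lemma cprod_assoc a b c : cprod (cprod a b) c = cprod a (cprod b c).
Proof.
  apply: functional_extensionality => m.
  have Hm := ltnSn m. rewrite (cprod_poly _ _ Hm) [RHS](cprod_poly _ _ Hm).
  transitivity ((trunc_poly m.+1 a * trunc_poly m.+1 b * trunc_poly m.+1 c)`_m).
  - apply: coefM_low => // j Hj. rewrite coef_poly ltnS Hj. apply: cprod_poly. by rewrite ltnS.
  - rewrite -mulrA. apply: coefM_low => // j Hj. rewrite [in RHS]coef_poly ltnS Hj.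
    symmetry; apply: cprod_poly. by rewrite ltnS.
Qed.

Lemma cprod_comm a b : cprod a b = cprod b a.
Proof. apply: functional_extensionality => m. by rewrite !(cprod_poly _ _ (ltnSn m)) mulrC. Qed.

Lemma cprod_addl a b c : cprod (cadd a b) c = cadd (cprod a c) (cprod b c).
Proof.
  apply: functional_extensionality => m. rewrite /cadd !cprod_big.
  rewrite -[Cadd _ _]/(\sum_(l < m.+1) a l * c (m - l)%N + \sum_(l < m.+1) b l * c (m - l)%N).
  rewrite -big_split /=. apply: eq_bigr => l _. by rewrite -mulrDl.
Qed.

Lemma cprod_1l b : cprod (tn 0) b = b.
Proof.
  apply: functional_extensionality => m. rewrite cprod_big big_ord_recl /= subn0.
  rewrite big1 ?addr0; first by rewrite /tn /= mul1r.
  move=> i _. by rewrite /tn /= mul0r.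
Qed.

Lemma cprod_lowest a b na nb :
  (forall m, (m < na)%coq_nat -> a m = C0) -> (forall m, (m < nb)%coq_nat -> b m = C0) ->
  cprod a b (na + nb)%N = a na * b nb.
Proof.
  move=> Hla Hlb. rewrite cprod_big.
  have Hi : (na < (na + nb).+1)%N by rewrite ltnS leq_addr.
  rewrite (bigD1 (Ordinal Hi)) //= big1 ?addr0; first by rewrite addKn.
  move=> [l Hl] /= Hne. have Hne' : l != na by apply: contra Hne => /eqP E; apply/eqP; apply: val_inj.
  case: (ltngtP l na) => Hc.
  - by rewrite Hla ?mul0r //; apply/ltP.
  - rewrite (Hlb (na + nb - l)%N) ?mulr0 //. apply/ltP. rewrite ltn_subLR; last by rewrite -ltnS.
    by rewrite ltn_add2r.
  - by move: Hne'; rewrite Hc eqxx.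
Qed.

Definition G : Type := {a : nat -> Cplx | is_germ a}.
Definition gv (x : G) : nat -> Cplx := proj1_sig x.
Lemma gvP (x : G) : is_germ (gv x). Proof. exact: proj2_sig x. Qed.
Lemma G_ext (x y : G) : gv x = gv y -> x = y.
Proof.
  case: x => [a Ha]; case: y => [b Hb] /= E. subst b. by rewrite (proof_irrelevance _ Ha Hb).
Qed.

HB.instance Definition _ := hasDecEq.Build G classical_eqP.
HB.instance Definition _ := hasChoice.Build G
  classical_find_correct classical_find_complete classical_find_ext.

Lemma germ_zero : is_germ (fun _ => C0). Proof. by apply: (germ_fin _ 0). Qed.
Lemma germ_opp a : is_germ a -> is_germ (fun m => Copp (a m)).
Proof.
  move=> H. have -> : (fun m => Copp (a m)) = cscal (-1) a.
  { apply: functional_extensionality => m. symmetry; exact: mulN1r. }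
  exact: germ_scal.
Qed.

Definition G0 : G := exist _ _ germ_zero.
Definition G1 : G := exist _ _ (germ_tn 0).
Definition Gadd (x y : G) : G := exist _ _ (germ_add _ _ (gvP x) (gvP y)).
Definition Gopp (x : G) : G := exist _ _ (germ_opp (gvP x)).
Definition Gmul (x y : G) : G := exist _ _ (germ_mul _ _ (gvP x) (gvP y)).

Lemma GaddA : associative Gadd.
Proof. move=> x y z; apply: G_ext; apply: functional_extensionality => m /=. exact: addrA. Qed.
Lemma GaddC : commutative Gadd.
Proof. move=> x y; apply: G_ext; apply: functional_extensionality => m /=. exact: addrC. Qed.
Lemma Gadd0 : left_id G0 Gadd.
Proof. move=> x; apply: G_ext; apply: functional_extensionality => m /=. exact: add0r. Qed.
Lemma GaddN : left_inverse G0 Gopp Gadd.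
Proof. move=> x; apply: G_ext; apply: functional_extensionality => m /=. exact: addNr. Qed.
HB.instance Definition _ := GRing.isZmodule.Build G GaddA GaddC Gadd0 GaddN.

Lemma GmulA : associative Gmul. Proof. move=> x y z; apply: G_ext => /=. by rewrite cprod_assoc. Qed.
Lemma GmulC : commutative Gmul. Proof. move=> x y; apply: G_ext => /=. by rewrite cprod_comm. Qed.
Lemma Gmul1 : left_id G1 Gmul. Proof. move=> x; apply: G_ext => /=. by rewrite cprod_1l. Qed.
Lemma GmulDl : left_distributive Gmul Gadd.
Proof. move=> x y z; apply: G_ext => /=. by rewrite cprod_addl. Qed.
Lemma G1_neq0 : G1 != G0 :> G.
Proof.
  apply/eqP => E. have := f_equal (fun x => gv x 0%N) E. rewrite /= /tn /= => E'.
  move: C1_neq0. by rewrite E' eqxx.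
Qed.
HB.instance Definition _ := GRing.Zmodule_isComNzRing.Build G GmulA GmulC Gmul1 GmulDl G1_neq0.

Definition Gunit : pred G := fun x => classical_eqb (exists y : G, y * x = 1) True.
Lemma GunitP x : reflect (exists y : G, y * x = 1) (Gunit x).
Proof.
  rewrite /Gunit /classical_eqb. case: excluded_middle_informative => H; constructor.
  - by rewrite H.
  - by move=> E; apply: H; apply: propositional_extensionality.
Qed.
Definition Ginv (x : G) : G :=
  match excluded_middle_informative (exists y : G, y * x = 1) with
  | left H => proj1_sig (constructive_indefinite_description _ H)
  | right _ => x end.
Lemma GmulVx : {in Gunit, left_inverse 1 Ginv *%R}.
Proof.
  move=> x /GunitP H. rewrite /Ginv. case: excluded_middle_informative => // H'.
  exact: (proj2_sig (constructive_indefinite_description _ H')).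
Qed.
Lemma GunitPl (x y : G) : y * x = 1 -> Gunit x.
Proof. move=> E. apply/GunitP. by exists y. Qed.
Lemma Ginv_out : {in [predC Gunit], Ginv =1 id}.
Proof.
  move=> x. rewrite inE => /GunitP H. rewrite /Ginv. by case: excluded_middle_informative.
Qed.
HB.instance Definition _ := GRing.ComNzRing_hasMulInverse.Build G GmulVx GunitPl Ginv_out.

Lemma gv0 : gv 0 = fun _ => C0. Proof. by []. Qed.
Lemma gvD (x y : G) : gv (x + y) = cadd (gv x) (gv y). Proof. by []. Qed.
Lemma gvB (x y : G) m : gv (x - y) m = gv x m - gv y m. Proof. by []. Qed.
Lemma gvM (x y : G) : gv (x * y) = cprod (gv x) (gv y). Proof. by []. Qed.
Lemma gv1 : gv 1 = tn 0. Proof. by []. Qed.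

Lemma gv_sum n (F : 'I_n -> G) m : gv (\sum_(j < n) F j) m = \sum_(j < n) gv (F j) m.
Proof.
  elim: n F => [|n IH] F; first by rewrite !big_ord0.
  by rewrite !big_ord_recr gvD /cadd IH.
Qed.

Lemma G_nonzero_coef (x : G) : x != 0 -> exists m, gv x m <> C0.
Proof.
  move=> H. apply: NNPP => Hn. move/eqP: H; apply. apply: G_ext.
  apply: functional_extensionality => m /=. apply: NNPP => Hm. apply: Hn. by exists m.
Qed.

Lemma G_order (x : G) : x != 0 ->
  exists n, gv x n <> C0 /\ forall m, (m < n)%coq_nat -> gv x m = C0.
Proof. by move/G_nonzero_coef/least_nonzero. Qed.

(* Germs form an integral domain: orders add under multiplication. *)
Lemma G_integral : GRing.integral_domain_axiom G.
Proof.
  move=> x y E. apply: NNPP => H.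
  have Hx : x != 0 by apply/negP => /eqP Ex; apply: H; rewrite Ex eqxx.
  have Hy : y != 0 by apply/negP => /eqP Ey; apply: H; rewrite Ey eqxx orbT.
  case: (G_order Hx) => na [Ha Hla]. case: (G_order Hy) => nb [Hb Hlb].
  have := f_equal (fun z => gv z (na + nb)%N) E. rewrite gvM gv0 (cprod_lowest Hla Hlb).
  exact: Cmul_neq0.
Qed.
HB.instance Definition _ := GRing.ComUnitRing_isIntegral.Build G G_integral.

(** * A Fredholm alternative over an integral domain

    This is linear algebra over the fraction
    field of [R], followed by clearing denominators. *)

Section FredholmAlternative.
Variable R : idomainType.
Local Open Scope quotient_scope.
Local Notation tofrac := (@FracField.tofrac R).
Local Notation "x %:F" := (tofrac x).

Lemma frac_repr (x : {fraction R}) : exists a b : R, b != 0 /\ x = a%:F / b%:F.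
Proof.
  exists (\n_(repr x)), (\d_(repr x)). split; first exact: denom_ratioP.
  have E : x = \pi_({fraction R}) (repr x) by rewrite reprK.
  rewrite {1}E. unlock tofrac.
  rewrite /GRing.inv /GRing.mul /= -FracField.pi_inv -FracField.pi_mul.
  rewrite /FracField.mulf /FracField.invf !numden_Ratio ?oner_neq0 ?denom_ratioP //.
  by rewrite mulr1 mul1r Ratio_numden.
Qed.

Lemma clear_denominators n (x : 'cV[{fraction R}]_n) :
  exists c : R, c != 0 /\ exists y : 'cV[R]_n, map_mx tofrac y = c%:F *: x.
Proof.
  elim: n x => [|n IH] x.
  - exists 1; split; first exact: oner_neq0. exists 0. apply/matrixP => i j. by case: i.
  - have [c [Hc [y Hy]]] := IH (\col_(i < n) x (lift 0 i) 0).
    have [a [b [Hb Ex]]] := frac_repr (x 0 0).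
    exists (c * b); split; first by rewrite mulf_neq0.
    exists (\col_i (if unlift 0 i is Some i' then b * y i' 0 else c * a)).
    apply/matrixP => i j. rewrite !mxE (ord1 j). case: unliftP => [i'|] Ei.
    + have := congr1 (fun M : 'cV_n => M i' 0) Hy. rewrite !mxE rmorphM /= => ->.
      rewrite rmorphM -Ei /= mulrA. congr (_ * _). by rewrite mulrC.
    + subst i. rewrite Ex !rmorphM /= -mulrA. congr (_ * _).
      rewrite mulrC divfK //. by rewrite tofrac_eq0.
Qed.

Lemma map_tofrac_inj m n (A B : 'M[R]_(m, n)) : map_mx tofrac A = map_mx tofrac B -> A = B.
Proof.
  move=> E. apply/matrixP => i j. have := congr1 (fun M : 'M_(m, n) => M i j) E.
  by rewrite !mxE => /eqP; rewrite tofrac_eq => /eqP.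
Qed.

Lemma fredholm_alternative p k (D : 'M[R]_(p, k)) (b : 'cV[R]_p) :
  (exists y : 'cV[R]_k, exists c : R, c != 0 /\ D *m y = c *: b) \/
  (exists w : 'rV[R]_p, w *m D = 0 /\ w *m b != 0).
Proof.
  set Df := map_mx tofrac D. set bf := map_mx tofrac b.
  case: (boolP ((bf^T <= Df^T)%MS)) => Hin.
  - left. move/submxP: Hin => [x Hx].
    have Eb : bf = Df *m x^T by rewrite -[bf]trmxK Hx trmx_mul trmxK.
    have [c [Hc [y Hy]]] := clear_denominators (x^T).
    exists y, c. split => //. apply: map_tofrac_inj.
    by rewrite map_mxM map_mxZ Hy -/Df -/bf -scalemxAr Eb.
  - right. rewrite submxE in Hin.
    have [j Hj] : exists j, (bf^T *m cokermx Df^T) 0 j != 0.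
    { apply: NNPP => Hn. case/negP: Hin. apply/eqP/matrixP => i j. rewrite (ord1 i) [RHS]mxE.
      apply: NNPP => Hz. apply: Hn. exists j. by apply/eqP. }
    (* a column of the cokernel of [Df^T] not orthogonal to [bf] *)
    set v := col j (cokermx Df^T).
    have Hv0 : Df^T *m v = 0 by rewrite /v colE mulmxA mulmx_coker mul0mx.
    have Hvb : (bf^T *m v) 0 0 != 0 by rewrite /v colE mulmxA -colE mxE.
    have [c [Hc [z Hz]]] := clear_denominators v.
    exists z^T. split.
    + apply: map_tofrac_inj. rewrite map_mxM -map_trmx Hz -/Df map_mx0 linearZ /=.
      by rewrite -scalemxAl -[Df]trmxK -trmx_mul Hv0 trmx0 scaler0.
    + apply/eqP => E.
      have E2 : map_mx tofrac (z^T *m b) = 0 by rewrite E map_mx0.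
      rewrite map_mxM -map_trmx Hz -/bf linearZ /= -scalemxAl in E2.
      have := congr1 (fun M : 'M_1 => M 0 0) E2.
      rewrite mxE [RHS]mxE.
      have -> : v^T *m bf = (bf^T *m v)^T by rewrite trmx_mul trmxK.
      rewrite mxE => /eqP. by rewrite mulf_eq0 tofrac_eq0 (negbTE Hc) (negbTE Hvb).
Qed.
End FredholmAlternative.

(* The germ of a coefficient sequence ([0] if it does not converge). *)
Definition mkG (f : nat -> Cplx) : G :=
  match excluded_middle_informative (is_germ f) with
  | left H => exist _ f H | right _ => 0 end.
Lemma gv_mkG f : is_germ f -> gv (mkG f) = f.
Proof. move=> H. rewrite /mkG. by case: excluded_middle_informative. Qed.

Definition geval (x : G) (s : Cplx) : Cplx := ps_eval (gv x) s.
Definition gconv (rho : R) (x : G) : Prop := ps_conv_on (gv x) rho.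
Definition in_disc (rho : R) (s : Cplx) : Prop := Rlt (Cnorm2 s) (Rmult rho rho).

Lemma gconv_mono rho rho' x : gconv rho x -> Rlt 0 rho' -> Rle rho' rho -> gconv rho' x.
Proof. move=> H H1 H2. exact: (conv_mono _ rho _ H (conj H1 H2)). Qed.

Lemma in_disc_real x rho : Rlt 0 x -> Rlt x rho -> in_disc rho (x, R0).
Proof. move=> H1 H2. rewrite /in_disc /Cnorm2 /=. nra. Qed.

Section EvalMorphism.
Variable rho : R.
Hypothesis rho_gt0 : Rlt 0 rho.

Lemma gconv_add x y : gconv rho x -> gconv rho y -> gconv rho (x + y).
Proof. move=> Hx Hy. exact: (proj1 (cadd_conv _ _ rho rho_gt0 Hx Hy)). Qed.
Lemma gconv_mul x y : gconv rho x -> gconv rho y -> gconv rho (x * y).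
Proof. move=> Hx Hy. exact: (proj1 (cprod_conv _ _ rho rho_gt0 Hx Hy)). Qed.
Lemma gconv_0 : gconv rho 0.
Proof. exact: (fin_conv _ 0). Qed.
Lemma geval_add x y s : gconv rho x -> gconv rho y -> in_disc rho s ->
  geval (x + y) s = geval x s + geval y s.
Proof. move=> Hx Hy Hs. exact: (proj2 (cadd_conv _ _ rho rho_gt0 Hx Hy) s Hs). Qed.
Lemma geval_mul x y s : gconv rho x -> gconv rho y -> in_disc rho s ->
  geval (x * y) s = geval x s * geval y s.
Proof. move=> Hx Hy Hs. exact: (proj2 (cprod_conv _ _ rho rho_gt0 Hx Hy) s Hs). Qed.
Lemma geval_0 s : geval 0 s = 0.
Proof. by rewrite /geval (fin_eval _ 0). Qed.

Lemma gconv_sum n (F : 'I_n -> G) : (forall j, gconv rho (F j)) -> gconv rho (\sum_(j < n) F j).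
Proof.
  elim: n F => [|n IH] F HF; first by rewrite big_ord0; exact: gconv_0.
  rewrite big_ord_recr /=. apply: gconv_add => //. apply: IH => j. exact: HF.
Qed.
Lemma geval_sum n (F : 'I_n -> G) s : (forall j, gconv rho (F j)) -> in_disc rho s ->
  geval (\sum_(j < n) F j) s = \sum_(j < n) geval (F j) s.
Proof.
  elim: n F => [|n IH] F HF Hs; first by rewrite !big_ord0 geval_0.
  rewrite !big_ord_recr /= geval_add //; first by rewrite IH.
  apply: gconv_sum => j; exact: HF.
Qed.

Definition mx_conv m n (A : 'M[G]_(m, n)) : Prop := forall i j, gconv rho (A i j).
Definition mx_eval m n (s : Cplx) (A : 'M[G]_(m, n)) : 'M[Cplx]_(m, n) := map_mx (geval^~ s) A.

Lemma mx_conv_mul m n p (A : 'M[G]_(m, n)) (B : 'M[G]_(n, p)) :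
  mx_conv A -> mx_conv B -> mx_conv (A *m B).
Proof. move=> HA HB i k. rewrite mxE. apply: gconv_sum => j. exact: gconv_mul. Qed.

Lemma mx_eval_mul m n p (A : 'M[G]_(m, n)) (B : 'M[G]_(n, p)) s :
  mx_conv A -> mx_conv B -> in_disc rho s -> mx_eval s (A *m B) = mx_eval s A *m mx_eval s B.
Proof.
  move=> HA HB Hs. apply/matrixP => i k. rewrite !mxE geval_sum //.
  - apply: eq_bigr => j _. by rewrite geval_mul // !mxE.
  - move=> j. exact: gconv_mul.
Qed.
End EvalMorphism.

Lemma G_zero_of_eval (X : G) rho : Rlt 0 rho -> gconv rho X ->
  (forall x, Rlt 0 x -> Rlt x rho -> geval X (x, R0) = 0) -> X = 0.
Proof.
  move=> Hr Hc H. apply: G_ext. apply: functional_extensionality => m.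
  apply: (ps_zero_on_segment _ rho Hr Hc) => x [Hx1 Hx2]. exact: H.
Qed.

Lemma mx_conv_mono rho rho' m n (A : 'M[G]_(m, n)) :
  mx_conv rho A -> Rlt 0 rho' -> Rle rho' rho -> mx_conv rho' A.
Proof. move=> H H1 H2 i j. exact: gconv_mono (H i j) H1 H2. Qed.

Lemma mx_conv_exists m n (A : 'M[G]_(m, n)) : exists rho, Rlt 0 rho /\ mx_conv rho A.
Proof.
  pose entry (i j : nat) : G :=
    if (insub i, insub j) is (Some i', Some j') then A i' j' else 0.
  have Hentry : forall (i : 'I_m) (j : 'I_n), entry i j = A i j by move=> i j; rewrite /entry !valK.
  have [rho [Hr H]] : exists rho, Rlt 0 rho /\ forall i, (i < m)%coq_nat ->
                        forall j, (j < n)%coq_nat -> gconv rho (entry i j).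
  { apply: (common_radius m (fun i rho => forall j, (j < n)%coq_nat -> gconv rho (entry i j))).
    - move=> i r1 r2 H [H1 H2] j Hj. exact: (gconv_mono (H j Hj) H1 H2).
    - move=> i _. apply: (common_radius n (fun j rho => gconv rho (entry i j))).
      + move=> j r1 r2 H [H1 H2]. exact: (gconv_mono H H1 H2).
      + move=> j _. have [r0 [Hr0 H0]] := gvP (entry i j). by exists r0. }
  exists rho; split => // i j. rewrite -Hentry. apply: H; exact/ltP.
Qed.

Definition tG : G := mkG (tn 1).
Lemma gv_tG : gv tG = tn 1. Proof. exact: gv_mkG (germ_tn 1). Qed.

Lemma gv_tG_mul X m : gv (tG * X) m = if m is m'.+1 then gv X m' else C0.
Proof.
  rewrite gvM gv_tG cprod_big. case: m => [|m].
  - by rewrite big_ord_recl big_ord0 /tn /= mul0r addr0.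
  - rewrite big_ord_recl big_ord_recl /= big1 ?addr0.
    + by rewrite /tn /= mul0r mul1r add0r subn1.
    + move=> i _. by rewrite /tn /= mul0r.
Qed.

Lemma gv_tGn n : gv (tG ^+ n) = tn n.
Proof.
  elim: n => [|n IH]; first by rewrite expr0 gv1.
  apply: functional_extensionality => m. rewrite exprS gv_tG_mul IH.
  by case: m => [|m]; rewrite /tn.
Qed.

Lemma tG_neq0 : tG != 0.
Proof.
  apply/eqP => E. have := f_equal (fun z => gv z 1%N) E. rewrite gv_tG gv0 /tn /= => E'.
  move: C1_neq0. by rewrite E' eqxx.
Qed.

Lemma gconv_tGn n rho : gconv rho (tG ^+ n).
Proof. rewrite /gconv gv_tGn. exact: (fin_conv _ n.+1 _ (tn_support n)). Qed.

Lemma geval_tGn n s : geval (tG ^+ n) s = Cpow s n.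
Proof. by rewrite /geval gv_tGn tn_eval. Qed.

Lemma G_divide_tGn (Y : G) n : (forall m, (m < n)%N -> gv Y m = C0) ->
  Y = tG ^+ n * mkG (sh n (gv Y)).
Proof.
  move=> HY. apply: G_ext. rewrite gvM gv_tGn gv_mkG; last exact: germ_sh n _ (gvP Y).
  rewrite cprod_tn // => m /ltP. exact: HY.
Qed.

Definition cG (z : Cplx) : G := mkG (cscal z (tn 0)).
Lemma gv_cG_mul z X m : gv (cG z * X) m = z * gv X m.
Proof.
  rewrite gvM gv_mkG; last exact: germ_scal z _ (germ_tn 0).
  rewrite cprod_big big_ord_recl big1 /=.
  - by rewrite addr0 subn0 /cscal /tn /= (Cmul_comm z) Cmul_1l.
  - move=> i _. by rewrite /cscal /tn /= Cmul_0r mul0r.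
Qed.

Lemma cprod_below_order a b na : (forall m, (m < na)%coq_nat -> a m = C0) ->
  forall k, (k < na)%N -> cprod a b k = C0.
Proof.
  move=> Ha k Hk. rewrite cprod_big big1 // => [[l Hl]] _ /=. rewrite Ha ?mul0r //.
  apply/ltP. exact: leq_ltn_trans (Hl : (l <= k)%N) Hk.
Qed.

(** Columns of germs versus coefficient arrays [a m i] (coefficient of [t^m]
    in component [i]), the representation used in the statement. *)

Definition gcol n (a : nat -> nat -> Cplx) : 'cV[G]_n := \col_(i < n) mkG (fun m => a m i).
Definition coef_array n (v : 'cV[G]_n) : nat -> nat -> Cplx :=
  fun m i => if insub i is Some o then gv (v o 0) m else C0.

Lemma coef_array_ord n (v : 'cV[G]_n) m (o : 'I_n) : coef_array v m o = gv (v o 0) m.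
Proof. by rewrite /coef_array valK. Qed.

Lemma coef_array_germ n (v : 'cV[G]_n) : is_germ_vec n (coef_array v).
Proof. move=> i /ltP Hi. have -> : i = Ordinal Hi by []. rewrite /coef_array valK. exact: gvP. Qed.

Lemma gv_gcol n a (o : 'I_n) : is_germ_vec n a -> gv (gcol n a o 0) = fun m => a m o.
Proof. move=> Ha. rewrite mxE. apply: gv_mkG. apply: Ha. exact/ltP. Qed.

(** * The complex [E^.] as matrices of germs *)

Section GermComplex.
Variables (N : nat) (RB : R) (r : nat -> nat) (d : nat -> nat -> nat -> nat -> Cplx).
Hypothesis Hbc : is_bounded_complex N RB r d.

Definition dmat k : 'M[G]_(r k.+1, r k) := \matrix_(i, j) mkG (fun m => d k m i j).

Lemma RB_gt0 : Rlt 0 RB. Proof. by case: Hbc. Qed.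

Lemma d_entry_conv k (i : 'I_(r k.+1)) (j : 'I_(r k)) : ps_conv_on (fun m => d k m i j) RB.
Proof. case: Hbc => _ [_ [H _]]. apply: H; exact/ltP. Qed.

Lemma gv_dmat k i j : gv (dmat k i j) = fun m => d k m i j.
Proof. rewrite mxE. apply: gv_mkG. exists RB. split; [exact: RB_gt0 | exact: d_entry_conv]. Qed.

Lemma dmat_conv k rho : Rlt 0 rho -> Rle rho RB -> mx_conv rho (dmat k).
Proof. move=> H1 H2 i j. rewrite /gconv gv_dmat. apply: (conv_mono _ RB) => //. exact: d_entry_conv. Qed.

Lemma mx_eval_dmat k s i j : mx_eval s (dmat k) i j = ps_eval (fun m => d k m i j) s.
Proof. by rewrite mxE /geval gv_dmat. Qed.

Lemma dgerm_mx k (v : 'cV[G]_(r k)) m (i : 'I_(r k.+1)) :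
  dgerm r d k (coef_array v) m i = gv ((dmat k *m v) i 0) m.
Proof.
  rewrite mxE gv_sum /dgerm csum_exchange csum_big. apply: eq_bigr => j _.
  rewrite gvM gv_dmat /cprod. apply: csum_ext => l _. by rewrite coef_array_ord.
Qed.

Lemma dgerm_ext k (a b : nat -> nat -> Cplx) m i :
  (forall m j, (j < r k)%N -> a m j = b m j) -> dgerm r d k a m i = dgerm r d k b m i.
Proof. move=> H. apply: csum_ext => l _. apply: csum_ext => j /ltP Hj. by rewrite H. Qed.

Lemma fibre_apply_mx k s (x : nat -> Cplx) (i : 'I_(r k.+1)) : in_disc RB s ->
  fibre_apply r d k s x i = (mx_eval s (dmat k) *m \col_j x j) i 0.
Proof.
  move=> Hs. rewrite /fibre_apply csum_big mxE. apply: eq_bigr => j _.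
  by rewrite mx_eval_dmat mxE.
Qed.

(* [d^(k+1) d^k = 0] holds for germs, by the identity theorem. *)
Lemma dmat_dd k : dmat k.+1 *m dmat k = 0.
Proof.
  have HR := RB_gt0. have Hc := mx_conv_mul HR (dmat_conv (k := k.+1) HR (Rle_refl _)) (dmat_conv (k := k) HR (Rle_refl _)).
  apply/matrixP => i l. rewrite [RHS]mxE. apply: (G_zero_of_eval HR (Hc i l)) => x Hx1 Hx2.
  have Hs := in_disc_real Hx1 Hx2.
  have -> : geval ((dmat k.+1 *m dmat k) i l) (x, R0) = mx_eval (x, R0) (dmat k.+1 *m dmat k) i l
    by rewrite [RHS]mxE.
  rewrite (mx_eval_mul HR (dmat_conv HR (Rle_refl _)) (dmat_conv HR (Rle_refl _)) Hs).
  case: Hbc => _ [_ [_ Hdd]].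
  have := Hdd k (x, R0) Hs i l (elimTF ltP (ltn_ord i)) (elimTF ltP (ltn_ord l)).
  rewrite csum_big mxE => E. apply: etrans E. apply: eq_bigr => j _. by rewrite !mx_eval_dmat.
Qed.

Lemma obstruction_vanishes k rho (b : 'cV[G]_(r k.+1)) (w : 'rV[G]_(r k.+1)) :
  Rlt 0 rho -> Rle rho RB -> mx_conv rho b ->
  (forall x, Rlt 0 x -> Rlt x rho ->
     exists X : 'cV[Cplx]_(r k), mx_eval (x, R0) b = mx_eval (x, R0) (dmat k) *m X) ->
  w *m dmat k = 0 -> w *m b = 0.
Proof.
  move=> Hr HrRB Hb Him Hw.
  have [rw [Hrw Hcw]] := mx_conv_exists w.
  pose r1 := Rmin rw rho.
  have Hr1 : Rlt 0 r1 by apply: Rmin_pos.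
  have Hr1w : Rle r1 rw := Rmin_l _ _. have Hr1b : Rle r1 rho := Rmin_r _ _.
  have Cw := mx_conv_mono Hcw Hr1 Hr1w. have Cb := mx_conv_mono Hb Hr1 Hr1b.
  have CD : mx_conv r1 (dmat k) := dmat_conv Hr1 (Rle_trans _ _ _ Hr1b HrRB).
  apply/matrixP => i j. rewrite [RHS]mxE.
  apply: (G_zero_of_eval Hr1 (mx_conv_mul Hr1 Cw Cb i j)) => x Hx1 Hx2.
  have Hs := in_disc_real Hx1 Hx2.
  have [X HX] := Him x Hx1 (Rlt_le_trans _ _ _ Hx2 Hr1b).
  have -> : geval ((w *m b) i j) (x, R0) = mx_eval (x, R0) (w *m b) i j by rewrite [RHS]mxE.
  rewrite (mx_eval_mul Hr1 Cw Cb Hs) HX mulmxA -(mx_eval_mul Hr1 Cw CD Hs) Hw.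
  have -> : mx_eval (x, R0) (0 : 'M[G]_(1, r k)) = 0.
  { apply/matrixP => a e. by rewrite !mxE geval_0. }
  by rewrite mul0mx mxE.
Qed.

(* If [c b = d^q y] with [c] of order [n0], then [alpha = t c(n0)^-1 y] is a
   cocycle modulo [t^(n0+1)] whose obstruction is [b(0)]. *)
Lemma lift_from_solution k (b : 'cV[G]_(r k.+1)) (y : 'cV[G]_(r k)) (c : G) :
  c != 0 -> dmat k *m y = c *: b ->
  exists n, (1 <= n)%coq_nat /\ exists alpha, is_germ_vec (r k) alpha /\
    trunc_cocycle r d k n alpha /\
    forall i : 'I_(r k.+1), obs_rep r d k n alpha i = gv (b i 0) 0.
Proof.
  move=> Hc Hy. have [n0 [Hcn0 Hclow]] := G_order Hc.
  pose lift := (tG * cG (Cinv (gv c n0))) *: y.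
  (* the coefficients of [d^k alpha]: a shifted, rescaled copy of [c b] *)
  have Hcoef : forall (i : 'I_(r k.+1)) m, dgerm r d k (coef_array lift) m i =
      if m is m'.+1 then Cinv (gv c n0) * cprod (gv c) (gv (b i 0)) m' else C0.
  { move=> i m. rewrite dgerm_mx /lift -scalemxAr Hy scalerA !mxE.
    rewrite [X in gv X m](_ : _ = tG * (cG (Cinv (gv c n0)) * (c * b i 0))); last by rewrite !mulrA.
    rewrite gv_tG_mul. case: m => [|m] //. by rewrite gv_cG_mul gvM. }
  exists n0.+1. split; first by apply/leP.
  exists (coef_array lift). split; [exact: coef_array_germ | split].
  - move=> m i /ltP Hm /ltP Hi. move: (Hcoef (Ordinal Hi) m) => /= ->.
    case: m Hm => [|m] Hm //. rewrite (cprod_below_order _ Hclow) ?mulr0 //.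
  - move=> i. rewrite /obs_rep Hcoef.
    have -> : cprod (gv c) (gv (b i 0)) n0 = gv c n0 * gv (b i 0) 0.
    { rewrite -{1}[n0]addn0. apply: cprod_lowest => // m /ltP. by rewrite ltn0. }
    by rewrite mulrA [Cinv _ * _]Cinv_l // mul1r.
Qed.

Lemma dgerm_rho_rep k n0 (X : nat -> Cplx) m i : (m <= n0)%N ->
  dgerm r d k (rho_rep n0 X) m i = if Nat.eqb m n0 then d0_apply r d k X i else C0.
Proof.
  move=> Hm. rewrite /dgerm csum_first [csum m _]csum_zero.
  - rewrite Cadd_0r PeanoNat.Nat.sub_0_r /rho_rep. case: PeanoNat.Nat.eqb_spec => E //.
    apply: csum_zero => j _. by rewrite Cmul_0r.
  - move=> l /ltP Hl. apply: csum_zero => j _. rewrite /rho_rep.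
    case: PeanoNat.Nat.eqb_spec => E; last by rewrite Cmul_0r.
    exfalso. move/leP: Hm. move/ltP: Hl. lia.
Qed.

Lemma trunc_class_of_obstruction k n alpha (beta : nat -> Cplx) (bt0 : nat -> Cplx) :
  (1 <= n)%coq_nat -> (forall i, (i < r k.+1)%N -> obs_rep r d k n alpha i = bt0 i) ->
  H0_eq r d k bt0 beta ->
  Htrunc_eq r d k n (o_ni_rep r d k n (n - 1) alpha) (rho_rep (n - 1) beta).
Proof.
  move=> Hn Hobs [X HX]. exists (rho_rep (n - 1) X). split.
  - move=> j _. apply: (germ_fin _ n) => m Hm. rewrite /rho_rep.
    case: PeanoNat.Nat.eqb_spec => // E. exfalso. lia.
  - move=> m i Hm Hi. rewrite dgerm_rho_rep; last by apply/leP; lia.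
    rewrite /o_ni_rep /rho_rep. case: PeanoNat.Nat.eqb_spec => E.
    + rewrite Hobs; last exact/ltP. exact: HX.
    + exact: subrr.
Qed.

Section Sufficiency.
Variables (k n : nat) (alpha eta : nat -> nat -> Cplx) (beta : nat -> Cplx).
Hypotheses (n_ge1 : (1 <= n)%N) (alpha_germ : is_germ_vec (r k) alpha)
  (eta_germ : is_germ_vec (r k) eta) (alpha_cocycle : trunc_cocycle r d k n alpha)
  (alpha_eta : forall m i, (m < n)%coq_nat -> (i < r k.+1)%coq_nat ->
     o_ni_rep r d k n (n - 1) alpha m i - rho_rep (n - 1) beta m i = dgerm r d k eta m i).

Definition corrected : 'cV[G]_(r k) := gcol (r k) alpha - tG *: gcol (r k) eta.
Definition cob_corrected : 'cV[G]_(r k.+1) := dmat k *m corrected.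

Let dgerm_gcol a : is_germ_vec (r k) a -> forall (i : 'I_(r k.+1)) m,
    gv ((dmat k *m gcol (r k) a) i 0) m = dgerm r d k a m i.
Proof.
  move=> Ha i m. rewrite -dgerm_mx. apply: dgerm_ext => m0 j Hj.
  by rewrite -[j]/(nat_of_ord (Ordinal Hj)) coef_array_ord gv_gcol.
Qed.

Lemma cob_corrected_formula (i : 'I_(r k.+1)) m :
  gv (cob_corrected i 0) m = dgerm r d k alpha m i - (if m is m'.+1 then dgerm r d k eta m' i else C0).
Proof.
  rewrite -(dgerm_gcol alpha_germ) /cob_corrected /corrected mulmxBr -scalemxAr !mxE gvB gv_tG_mul.
  case: m => [|m] //. by rewrite -(dgerm_gcol eta_germ) mxE.
Qed.

(* [Y] vanishes to order [n], with [t^n]-coefficient [beta]: this is the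
   hypothesis [o_(n,n-1)(alpha) = rho_(n-1)(beta) + d(eta)]. *)
Lemma cob_corrected_low (i : 'I_(r k.+1)) m : (m < n)%N -> gv (cob_corrected i 0) m = C0.
Proof.
  move=> Hm. rewrite cob_corrected_formula alpha_cocycle; [| exact/ltP | exact/ltP].
  case: m Hm => [|m] Hm; first exact: subrr.
  have := alpha_eta (elimTF ltP (ltnW Hm)) (elimTF ltP (ltn_ord i)).
  rewrite /o_ni_rep /rho_rep. case: PeanoNat.Nat.eqb_spec => [E|_]; first lia.
  move=> <-. by rewrite subrr sub0r oppr0.
Qed.

Lemma cob_corrected_n (i : 'I_(r k.+1)) : gv (cob_corrected i 0) n = beta i.
Proof.
  rewrite cob_corrected_formula. case: n n_ge1 alpha_eta => // n' _ Heta.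
  have := Heta n' i (elimTF ltP (ltnSn n')) (elimTF ltP (ltn_ord i)).
  rewrite /o_ni_rep /rho_rep /obs_rep subn1 /= PeanoNat.Nat.eqb_refl => <-. exact: subKr.
Qed.

(* [B = t^-n Y], the candidate family [beta~] of cocycles. *)
Definition beta_ext : 'cV[G]_(r k.+1) := \col_i mkG (sh n (gv (cob_corrected i 0))).

Lemma cob_corrected_beta_ext : cob_corrected = tG ^+ n *: beta_ext.
Proof.
  apply/matrixP => i j. rewrite (ord1 j) [RHS]mxE [beta_ext i 0]mxE.
  apply: G_divide_tGn => m. exact: cob_corrected_low.
Qed.

Lemma gv_beta_ext (i : 'I_(r k.+1)) : gv (beta_ext i 0) = sh n (gv (cob_corrected i 0)).
Proof. rewrite [beta_ext i 0]mxE. exact: gv_mkG (germ_sh n _ (gvP _)). Qed.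

Lemma beta_ext_at0 (i : 'I_(r k.+1)) : gv (beta_ext i 0) 0 = beta i.
Proof. by rewrite gv_beta_ext /sh /= cob_corrected_n. Qed.

(* [d^(k+1) B = 0]: [t^n d^(k+1) B = d^(k+1) d^k (alpha - t eta) = 0] and
   germs form an integral domain. *)
Lemma beta_ext_cocycle : dmat k.+1 *m beta_ext = 0.
Proof.
  apply/eqP. have := scalemx_eq0 (tG ^+ n) (dmat k.+1 *m beta_ext).
  rewrite (negbTE (expf_neq0 n tG_neq0)) /= => <-.
  by rewrite scalemxAr -cob_corrected_beta_ext /cob_corrected mulmxA dmat_dd mul0mx.
Qed.

Lemma beta_ext_in_image rho s : Rlt 0 rho -> Rle rho RB ->
  mx_conv rho corrected -> mx_conv rho beta_ext -> in_disc rho s -> s <> C0 ->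
  mx_eval s beta_ext = mx_eval s (dmat k) *m (Cinv (Cpow s n) *: mx_eval s corrected).
Proof.
  move=> Hr HrRB Hc HB Hs Hs0. have CD := dmat_conv (k := k) Hr HrRB.
  rewrite -scalemxAr -(mx_eval_mul Hr CD Hc Hs) -/cob_corrected cob_corrected_beta_ext.
  apply/matrixP => i j. rewrite [LHS]mxE [RHS]mxE [in RHS]mxE [in RHS]mxE.
  rewrite (geval_mul Hr (@gconv_tGn n rho) (HB i j) Hs) geval_tGn.
  by rewrite mulrA [Cinv _ * _]Cinv_l ?mul1r //; exact: Cpow_neq0.
Qed.
End Sufficiency.

Definition cvec_nat n (X : 'cV[Cplx]_n) : nat -> Cplx :=
  fun j => if insub j is Some o then X o 0 else C0.

Lemma col_cvec_nat n (X : 'cV[Cplx]_n) : \col_(j < n) cvec_nat X j = X.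
Proof. apply/matrixP => i j. by rewrite (ord1 j) mxE /cvec_nat valK. Qed.

Lemma coef_array_col n (v : 'cV[G]_n) (o : 'I_n) : (fun m => coef_array v m o) = gv (v o 0).
Proof. apply: functional_extensionality => m. exact: coef_array_ord. Qed.

Lemma eval_coef_array n (v : 'cV[G]_n) s :
  \col_(j < n) ps_eval (fun m => coef_array v m j) s = mx_eval s v.
Proof. apply/matrixP => i j. by rewrite (ord1 j) !mxE coef_array_col. Qed.

Lemma lift_of_second_class q beta : second_class_obstructed RB r d q beta ->
  exists n, (1 <= n)%coq_nat /\ exists alpha, is_germ_vec (r q) alpha /\
    trunc_cocycle r d q n alpha /\
    Htrunc_eq r d q n (o_ni_rep r d q n (n - 1) alpha) (rho_rep (n - 1) beta).
Proof.
  case=> rho [Hr [HrRB [bt [Hbt [_ [_ [Heq Hex]]]]]]].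
  have Hbg : is_germ_vec (r q.+1) bt by move=> i Hi; exists rho; split => //; exact: Hbt.
  pose b := gcol (r q.+1) bt.
  have Hb : mx_conv rho b by move=> i j; rewrite (ord1 j) /gconv gv_gcol //; apply: Hbt; exact/ltP.
  case: (fredholm_alternative (dmat q) b) => [[y [c [Hc Hy]]] | [w [Hw Hwb]]].
  - have [n [Hn [alpha [Ha [Hcoc Hobs]]]]] := lift_from_solution Hc Hy.
    exists n; split => //; exists alpha; do 2 split => //.
    apply: trunc_class_of_obstruction Hn _ Heq => i Hi.
    by rewrite -[i]/(nat_of_ord (Ordinal Hi)) Hobs gv_gcol.
  - (* otherwise [w] would detect [b] off the image of [d^q], contradicting [Hex] *)
    exfalso. move/negP: Hwb; apply; apply/eqP.
    apply: (obstruction_vanishes Hr HrRB Hb) Hw => x Hx1 Hx2.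
    have Hs := in_disc_real Hx1 Hx2.
    have [X HX] := Hex (x, R0) (Cnorm2_real_pos x Hx1) Hs.
    exists (\col_j X j). apply/matrixP => i j.
    rewrite (ord1 j) -fibre_apply_mx; last exact: in_disc_real Hx1 (Rlt_le_trans _ _ _ Hx2 HrRB).
    by rewrite mxE /geval gv_gcol // HX //; exact/ltP.
Qed.

Lemma second_class_of_lift q n alpha eta beta :
  ker0 r d q.+1 beta -> (1 <= n)%N -> is_germ_vec (r q) alpha -> is_germ_vec (r q) eta ->
  trunc_cocycle r d q n alpha ->
  (forall m i, (m < n)%coq_nat -> (i < r q.+1)%coq_nat ->
     o_ni_rep r d q n (n - 1) alpha m i - rho_rep (n - 1) beta m i = dgerm r d q eta m i) ->
  second_class_obstructed RB r d q beta.
Proof.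
  move=> Hker Hn Ha He Hcoc Heta.
  pose C := corrected q alpha eta. pose B := beta_ext q n alpha eta.
  have [rc [Hrc HC]] := mx_conv_exists C. have [rb [Hrb HB]] := mx_conv_exists B.
  pose rho := Rmin (Rmin rc rb) RB.
  have Hr : Rlt 0 rho by apply: Rmin_pos; [apply: Rmin_pos | exact: RB_gt0].
  have HrRB : Rle rho RB := Rmin_r _ _.
  have CC : mx_conv rho C := mx_conv_mono HC Hr (Rle_trans _ _ _ (Rmin_l _ _) (Rmin_l _ _)).
  have CB : mx_conv rho B := mx_conv_mono HB Hr (Rle_trans _ _ _ (Rmin_l _ _) (Rmin_r _ _)).
  have Hdisc : forall s, in_disc rho s -> in_disc RB s.
  { rewrite /in_disc => s Hs. apply: (Rlt_le_trans _ _ _ Hs). apply: Rmult_le_compat; lra. }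
  have HB0 : forall i, (i < r q.+1)%coq_nat -> coef_array B 0 i = beta i.
  { move=> i /ltP Hi. by rewrite -[i]/(nat_of_ord (Ordinal Hi)) coef_array_ord (beta_ext_at0 Hn Ha He Heta). }
  exists rho; split => //; split => //; exists (coef_array B).
  split; [| split; [| split; [| split]]].
  - move=> i /ltP Hi. rewrite -[i]/(nat_of_ord (Ordinal Hi)) coef_array_col. exact: CB.
  -
    move=> s Hs i /ltP Hi. rewrite -[i]/(nat_of_ord (Ordinal Hi)) fibre_apply_mx; last exact: Hdisc.
    rewrite eval_coef_array -(mx_eval_mul Hr (dmat_conv Hr HrRB) CB Hs) (beta_ext_cocycle Hn Ha He Hcoc Heta).
    by rewrite !mxE geval_0.
  - move=> i Hi. rewrite -(Hker i Hi). apply: csum_ext => j Hj. by rewrite HB0.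
  - exists (fun _ => C0) => i Hi. rewrite HB0 //.
    rewrite [Csub _ _](subrr (beta i)) /d0_apply csum_zero // => j _. exact: Cmul_0r.
  -
    move=> s Hs0 Hs. have Hsne : s <> C0.
    { move=> E; move: Hs0; rewrite E /Cnorm2 /C0 /=. lra. }
    exists (cvec_nat (Cinv (Cpow s n) *: mx_eval s C)) => i /ltP Hi.
    rewrite -[i]/(nat_of_ord (Ordinal Hi)) fibre_apply_mx; last exact: Hdisc.
    rewrite col_cvec_nat.
    rewrite -(beta_ext_in_image Hn Ha He Hcoc Heta Hr HrRB CC CB Hs Hsne) mxE /geval.
    by rewrite coef_array_col.
Qed.
End GermComplex.

Unset Implicit Arguments.
Close Scope ring_scope.
Open Scope R_scope.

Theorem corollary2p7 (N : nat) (RB : R) (r : nat -> nat)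
    (d : nat -> nat -> nat -> nat -> Cplx) (q : nat) (beta : nat -> Cplx) :
  is_bounded_complex N RB r d ->
  (q < N)%coq_nat ->
  ker0 r d (S q) beta -> ~ im0 r d q beta ->
  (second_class_obstructed RB r d q beta <->
   exists n : nat, (1 <= n)%coq_nat /\
     exists alpha : nat -> nat -> Cplx,
       is_germ_vec (r q) alpha /\ trunc_cocycle r d q n alpha /\
       Htrunc_eq r d q n (o_ni_rep r d q n (n - 1) alpha)
                         (rho_rep (n - 1) beta)).
Proof.
  move=> Hbc _ Hker _. split.
  - exact: (lift_of_second_class Hbc).
  - move=> [n [Hn [alpha [Ha [Hcoc [eta [He Heta]]]]]]].
    exact: (second_class_of_lift Hbc Hker (introT leP Hn) Ha He Hcoc Heta).
Qed.
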